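(* Let $f \in \mathcal{C}_{2\pi}$, let $A_n[f]$ be the Toeplitz matrix generated by $f$ and $c_n[f]$ the optimal circulant preconditioner for $A_n[f]$. Assume that $\cos c_n[f]$ is invertible for every $n$ and that there is a constant $C$ with $\|(\cos c_n[f])^{-1}\|_2\le C$ for all $n$. Then for every $\epsilon>0$ there exist positive integers $N$ and $M$ such that for every $n>N$ there are matrices $\overline{\mathscr R}_n[f],\overline{\mathscr E}_n[f]\in\mathbb{C}^{n\times n}$ with \[ \big[(\cos c_n[f])^{-1}\cos A_n[f]\big]^{*}\big[(\cos c_n[f])^{-1}\cos A_n[f]\big] = I_n+\overline{\mathscr R}_n[f]+\overline{\mathscr E}_n[f],\quad \operatorname{rank}\overline{\mathscr R}_n[f]\le 4M,\quad \|\overline{\mathscr E}_n[f]\|_2\le\epsilon. \]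
   Context: $\mathcal{C}_{2\pi}$ denotes the Banach space of all $2\pi$-periodic continuous complex-valued functions on $\mathbb{R}$ with the supremum norm $\|\cdot\|_\infty$. For $f\in\mathcal{C}_{2\pi}$ its Fourier coefficients are $a_k=\frac{1}{2\pi}\int_{-\pi}^{\pi} f(\theta)e^{-\mathbf{i}k\theta}\,d\theta$, $k\in\mathbb{Z}$. The Toeplitz matrix generated by $f$ is the $n\times n$ matrix $A_n[f]$ whose $(j,k)$ entry is $a_{j-k}$. The optimal circulant preconditioner $c_n[f]$ is the $n\times n$ circulant matrix whose $(j,k)$ entry is $c_{(j-k)\bmod n}$, where $c_k=\frac{(n-k)a_k+k\,a_{k-n}}{n}$ for $0\le k<n$. For a square matrix $X$, $\cos X=\sum_{m\ge0}\frac{(-1)^m}{(2m)!}X^{2m}$; $X^*$ is the conjugate transpose. $I_n$ is the $n\times n$ identity and $\|\cdot\|_2$ is the spectral norm. *)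

From Stdlib Require Import Reals Lra Lia ZArith Classical ClassicalEpsilon.
Open Scope R_scope.

Record Cx := mkC { re : R; im : R }.
Definition C0 : Cx := mkC 0 0.
Definition C1 : Cx := mkC 1 0.
Definition Cadd (x y : Cx) : Cx := mkC (re x + re y) (im x + im y).
Definition Cmul (x y : Cx) : Cx :=
  mkC (re x * re y - im x * im y) (re x * im y + im x * re y).
Definition Cscal (r : R) (x : Cx) : Cx := mkC (r * re x) (r * im x).
Definition Cconj (x : Cx) : Cx := mkC (re x) (- im x).
Definition Cmod (x : Cx) : R := sqrt (re x ^ 2 + im x ^ 2).
Definition Cexpi (t : R) : Cx := mkC (cos t) (sin t).

Fixpoint Csum (n : nat) (f : nat -> Cx) : Cx :=
  match n with O => C0 | S m => Cadd (Csum m f) (f m) end.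

Definition C2pi (f : R -> Cx) : Prop :=
  continuity (fun t => re (f t)) /\ continuity (fun t => im (f t)) /\
  forall t, f (t + 2 * PI) = f t.

(* Riemann integral of a real function over [a,b] (0 if not integrable;
   only used on continuous integrands, which are integrable). *)
Definition Rint (g : R -> R) (a b : R) : R :=
  match excluded_middle_informative
          (exists v, exists pr : Riemann_integrable g a b, RiemannInt pr = v) with
  | left H => proj1_sig (constructive_indefinite_description _ H)
  | right _ => 0
  end.

Definition fourier (f : R -> Cx) (k : Z) : Cx :=
  let g := fun t => Cmul (f t) (Cexpi (- (IZR k * t))) in
  mkC (/ (2 * PI) * Rint (fun t => re (g t)) (- PI) PI)
      (/ (2 * PI) * Rint (fun t => im (g t)) (- PI) PI).

(* ---------- n x n complex matrices (entries at indices < n are relevant) ---------- *)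
Definition mat := nat -> nat -> Cx.
Definition vec := nat -> Cx.

Definition mmul (n : nat) (A B : mat) : mat :=
  fun i j => Csum n (fun k => Cmul (A i k) (B k j)).
Definition madd (A B : mat) : mat := fun i j => Cadd (A i j) (B i j).
Definition mscal (r : R) (A : mat) : mat := fun i j => Cscal r (A i j).
Definition mid : mat := fun i j => if Nat.eqb i j then C1 else C0.
Definition mzero : mat := fun _ _ => C0.
Definition madj (A : mat) : mat := fun i j => Cconj (A j i).
Fixpoint mpow (n : nat) (A : mat) (m : nat) : mat :=
  match m with O => mid | S p => mmul n A (mpow n A p) end.
Definition mapply (n : nat) (A : mat) (v : vec) : vec :=
  fun i => Csum n (fun k => Cmul (A i k) (v k)).

Definition meq (n : nat) (A B : mat) : Prop :=
  forall i j, (i < n)%nat -> (j < n)%nat -> A i j = B i j.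

Definition toeplitz (f : R -> Cx) (n : nat) : mat :=
  fun j k => fourier f (Z.of_nat j - Z.of_nat k)%Z.

Definition circ_coef (f : R -> Cx) (n : nat) (k : nat) : Cx :=
  Cscal (/ INR n)
    (Cadd (Cscal (INR n - INR k) (fourier f (Z.of_nat k)))
          (Cscal (INR k) (fourier f (Z.of_nat k - Z.of_nat n)%Z))).
Definition opt_circ (f : R -> Cx) (n : nat) : mat :=
  fun j k => circ_coef f n (Z.to_nat (Z.modulo (Z.of_nat j - Z.of_nat k) (Z.of_nat n))).

(* limit of a real sequence (0 if it does not converge; it always converges below) *)
Definition Rlim (u : nat -> R) : R :=
  match excluded_middle_informative (exists l, Un_cv u l) with
  | left H => proj1_sig (constructive_indefinite_description _ H)
  | right _ => 0
  end.

Fixpoint cos_partial (n : nat) (X : mat) (N : nat) : mat :=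
  let t := mscal ((-1) ^ N / INR (fact (2 * N))) (mpow n X (2 * N)) in
  match N with
  | O => t
  | S p => madd (cos_partial n X p) t
  end.

Definition mcos (n : nat) (X : mat) : mat :=
  fun i j => mkC (Rlim (fun N => re (cos_partial n X N i j)))
                 (Rlim (fun N => im (cos_partial n X N i j))).

Definition vnorm (n : nat) (v : vec) : R :=
  sqrt (re (Csum n (fun i => mkC (Cmod (v i) ^ 2) 0))).

Definition opnorm_set (n : nat) (X : mat) (r : R) : Prop :=
  exists v : vec, vnorm n v = 1 /\ r = vnorm n (mapply n X v).
Definition opnorm (n : nat) (X : mat) : R :=
  match excluded_middle_informative
          (bound (opnorm_set n X) /\ exists r, opnorm_set n X r) with
  | left H => proj1_sig (completeness _ (proj1 H) (proj2 H))
  | right _ => 0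
  end.

Definition rank_le (n : nat) (X : mat) (r : nat) : Prop :=
  exists U V : mat, meq n X (fun i j => Csum r (fun k => Cmul (U i k) (V k j))).

Definition is_inverse (n : nat) (X B : mat) : Prop :=
  meq n (mmul n B X) mid /\ meq n (mmul n X B) mid.

(* By Fejer's theorem [f] is uniformly close to a trigonometric polynomial of degree [K].
   For such a symbol [A_n - c_n] vanishes, apart from its first and last [K] rows, outside a band
   of width [2K + 1] whose entries are [O(K / n)]: it is a matrix of rank [2K] plus one of
   norm [O(K^(3/2) / sqrt n)]. For the uniformly small remainder the Toeplitz matrix has small
   norm, and so has its optimal circulant, an average of cyclic conjugates of it. Since both
   [A_n] and [c_n] have norm at most [sup |f|], the cosine series can be truncated at a degree
   independent of [n], and [X^(k+1) - Y^(k+1) = X (X^k - Y^k) + (X - Y) Y^k] carries the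
   low-rank-plus-small splitting over to [cos A_n - cos c_n]. Multiplying by the bounded
   inverse gives [P = I + low rank + small], and expanding [P^* P] multiplies the rank by 4. *)

From Pilot Require Import Defs.
From Coquelicot Require Import Rcomplements Hierarchy RInt Derive Continuity RInt_analysis AutoDerive.
From Stdlib Require Import Reals Lra Lia ZArith Psatz FunctionalExtensionality Classical ClassicalEpsilon Bool.
Open Scope R_scope.

(* [Reals] also exports a [C1] (from [Cos_rel]). *)
Notation C1 := Defs.C1.

Lemma Cext : forall x y : Cx, re x = re y -> im x = im y -> x = y.
Proof. intros [a b] [c d]; simpl; intros -> ->; reflexivity. Qed.

Definition Copp (x : Cx) : Cx := mkC (- re x) (- im x).
Definition Csub (x y : Cx) : Cx := Cadd x (Copp y).

Lemma Cring : ring_theory C0 C1 Cadd Cmul Csub Copp (@eq Cx).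
Proof.
  constructor; intros; apply Cext; simpl; ring.
Qed.
Add Ring Cxring : Cring.

Ltac cx := apply Cext; simpl; ring.

Lemma Cscal_mul : forall r x, Cscal r x = Cmul (mkC r 0) x.
Proof. intros; cx. Qed.
Lemma Cconj_add : forall x y, Cconj (Cadd x y) = Cadd (Cconj x) (Cconj y).
Proof. intros; cx. Qed.
Lemma Cconj_mul : forall x y, Cconj (Cmul x y) = Cmul (Cconj x) (Cconj y).
Proof. intros; cx. Qed.
Lemma Cconj_conj : forall x, Cconj (Cconj x) = x.
Proof. intros; cx. Qed.

Fixpoint Rsum (n : nat) (g : nat -> R) : R :=
  match n with O => 0 | S m => Rsum m g + g m end.

Lemma Rsum_ext : forall n g h, (forall i, (i < n)%nat -> g i = h i) -> Rsum n g = Rsum n h.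
Proof. induction n; simpl; intros; auto. rewrite (IHn g h); [rewrite H|]; auto. Qed.
Lemma Rsum_add : forall n g h, Rsum n (fun i => g i + h i) = Rsum n g + Rsum n h.
Proof. induction n; simpl; intros; [ring|]. rewrite IHn; ring. Qed.
Lemma Rsum_scal : forall n c g, Rsum n (fun i => c * g i) = c * Rsum n g.
Proof. induction n; simpl; intros; [ring|]. rewrite IHn; ring. Qed.
Lemma Rsum_le : forall n g h, (forall i, (i < n)%nat -> g i <= h i) -> Rsum n g <= Rsum n h.
Proof. induction n; simpl; intros; [lra|]. apply Rplus_le_compat; auto. Qed.
Lemma Rsum_nonneg : forall n g, (forall i, (i < n)%nat -> 0 <= g i) -> 0 <= Rsum n g.
Proof. induction n; simpl; intros; [lra|]. apply Rplus_le_le_0_compat; auto. Qed.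
Lemma Rsum_const : forall n c, Rsum n (fun _ => c) = INR n * c.
Proof. induction n; intros; [simpl; ring|]. rewrite S_INR; simpl; rewrite IHn; ring. Qed.
Lemma Rsum_zero : forall n, Rsum n (fun _ => 0) = 0.
Proof. intros; rewrite Rsum_const; ring. Qed.
Lemma Rsum_split : forall p q g, Rsum (p + q) g = Rsum p g + Rsum q (fun i => g (p + i)%nat).
Proof.
  intros p q; induction q; simpl; intros. rewrite Nat.add_0_r; ring.
  rewrite Nat.add_succ_r; simpl; rewrite IHq; ring.
Qed.
Lemma Rsum_single_le : forall n g i0, (i0 < n)%nat -> (forall i, (i < n)%nat -> 0 <= g i) ->
  g i0 <= Rsum n g.
Proof.
  induction n; simpl; intros. lia.
  destruct (Nat.eq_dec i0 n). subst. pose proof (Rsum_nonneg n g (fun i Hi => H0 i ltac:(lia))). lra.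
  pose proof (IHn g i0 ltac:(lia) (fun i Hi => H0 i ltac:(lia))). pose proof (H0 n ltac:(lia)). lra.
Qed.
Lemma Rsum_single : forall n g i0, (i0 < n)%nat -> (forall i, (i < n)%nat -> i <> i0 -> g i = 0) ->
  Rsum n g = g i0.
Proof.
  induction n; simpl; intros. lia.
  destruct (Nat.eq_dec i0 n). subst.
  rewrite (Rsum_ext n g (fun _ => 0)), Rsum_zero. ring. intros; apply H0; lia.
  rewrite (IHn g i0), (H0 n); try lia. ring. intros; apply H0; lia.
Qed.

Lemma Cauchy_Schwarz_step : forall S X Y a b, 0 <= X -> 0 <= Y -> S * S <= X * Y ->
  (S + a * b) * (S + a * b) <= (X + a * a) * (Y + b * b).
Proof.
  intros.
  assert (2 * S * a * b <= X * b * b + Y * a * a).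
  { assert (Hq : (2*S*a*b) * (2*S*a*b) <= (X*b*b + Y*a*a) * (X*b*b + Y*a*a)).
    { pose proof (Rle_0_sqr (X*b*b - Y*a*a)). unfold Rsqr in *.
      assert (S*S*(a*b)*(a*b) <= X*Y*(a*b)*(a*b)).
      { assert (0 <= (X*Y - S*S)*((a*b)*(a*b))) by (apply Rmult_le_pos; [lra| pose proof (Rle_0_sqr (a*b)); unfold Rsqr in *; lra]). nra. }
      nra. }
    assert (0 <= X*b*b + Y*a*a) by nra.
    destruct (Rle_dec (2*S*a*b) 0). lra.
    nra. }
  nra.
Qed.
Lemma Cauchy_Schwarz : forall n x y,
  Rsum n (fun i => x i * y i) * Rsum n (fun i => x i * y i)
  <= Rsum n (fun i => x i * x i) * Rsum n (fun i => y i * y i).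
Proof.
  induction n; simpl; intros. lra.
  apply Cauchy_Schwarz_step; auto; apply Rsum_nonneg; intros; nra.
Qed.
Lemma Cauchy_Schwarz_sqrt : forall n x y,
  Rsum n (fun i => x i * y i) <= sqrt (Rsum n (fun i => x i * x i)) * sqrt (Rsum n (fun i => y i * y i)).
Proof.
  intros. rewrite <- sqrt_mult by (apply Rsum_nonneg; intros; nra).
  destruct (Rle_dec (Rsum n (fun i => x i * y i)) 0).
  - pose proof (sqrt_pos (Rsum n (fun i : nat => x i * x i) * Rsum n (fun i : nat => y i * y i))). lra.
  - rewrite <- (sqrt_square (Rsum n (fun i => x i * y i))) at 1 by lra.
    apply sqrt_le_1_alt. apply Cauchy_Schwarz.
Qed.

Lemma Csum_ext : forall n f g, (forall i, (i < n)%nat -> f i = g i) -> Csum n f = Csum n g.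
Proof. induction n; simpl; intros; auto. rewrite (IHn f g); [rewrite H|]; auto. Qed.
Lemma Csum_add : forall n f g, Csum n (fun i => Cadd (f i) (g i)) = Cadd (Csum n f) (Csum n g).
Proof. induction n; simpl; intros; [cx|]. rewrite IHn; ring. Qed.
Lemma Csum_mul_l : forall n c f, Csum n (fun i => Cmul c (f i)) = Cmul c (Csum n f).
Proof. induction n; simpl; intros; [cx|]. rewrite IHn; ring. Qed.
Lemma Csum_mul_r : forall n c f, Csum n (fun i => Cmul (f i) c) = Cmul (Csum n f) c.
Proof. induction n; simpl; intros; [cx|]. rewrite IHn; ring. Qed.
Lemma Csum_zero : forall n, Csum n (fun _ => C0) = C0.
Proof. induction n; simpl; auto. rewrite IHn; cx. Qed.
Lemma Csum_opp : forall n f, Csum n (fun i => Copp (f i)) = Copp (Csum n f).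
Proof. induction n; simpl; intros; [cx|]. rewrite IHn; ring. Qed.
Lemma Csum_sub : forall n f g, Csum n (fun i => Csub (f i) (g i)) = Csub (Csum n f) (Csum n g).
Proof. intros. unfold Csub. rewrite Csum_add, Csum_opp. auto. Qed.
Lemma Csum_scal : forall n r f, Csum n (fun i => Cscal r (f i)) = Cscal r (Csum n f).
Proof. intros. rewrite Cscal_mul, <- Csum_mul_l. apply Csum_ext; intros; apply Cscal_mul. Qed.
Lemma Csum_swap : forall n m (F : nat -> nat -> Cx),
  Csum n (fun i => Csum m (fun j => F i j)) = Csum m (fun j => Csum n (fun i => F i j)).
Proof.
  induction n; simpl; intros. rewrite Csum_zero; auto.
  rewrite IHn, <- Csum_add; auto.
Qed.
Lemma Csum_split : forall p q g, Csum (p + q) g = Cadd (Csum p g) (Csum q (fun i => g (p + i)%nat)).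
Proof.
  intros p q; induction q; simpl; intros. rewrite Nat.add_0_r; cx.
  rewrite Nat.add_succ_r; simpl; rewrite IHq; ring.
Qed.
Lemma Csum_single : forall n g i0, (i0 < n)%nat -> (forall i, (i < n)%nat -> i <> i0 -> g i = C0) ->
  Csum n g = g i0.
Proof.
  induction n; simpl; intros. lia.
  destruct (Nat.eq_dec i0 n). subst.
  rewrite (Csum_ext n g (fun _ => C0)), Csum_zero. cx. intros; apply H0; lia.
  rewrite (IHn g i0), (H0 n); try lia. cx. intros; apply H0; lia.
Qed.
Lemma Csum_const : forall n c, Csum n (fun _ => c) = Cscal (INR n) c.
Proof. induction n; intros. simpl; cx. rewrite S_INR; simpl; rewrite IHn; cx. Qed.
Lemma re_Csum : forall n f, re (Csum n f) = Rsum n (fun i => re (f i)).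
Proof. induction n; simpl; intros; auto. rewrite IHn; auto. Qed.
Lemma im_Csum : forall n f, im (Csum n f) = Rsum n (fun i => im (f i)).
Proof. induction n; simpl; intros; auto. rewrite IHn; auto. Qed.
Lemma Cconj_Csum : forall n f, Cconj (Csum n f) = Csum n (fun i => Cconj (f i)).
Proof. induction n; simpl; intros. cx. rewrite Cconj_add, IHn; auto. Qed.

Lemma Cmod_ge0 : forall x, 0 <= Cmod x.
Proof. intros; apply sqrt_pos. Qed.
Lemma Cmod_sq : forall x, Cmod x ^ 2 = re x ^ 2 + im x ^ 2.
Proof. intros; unfold Cmod. rewrite pow2_sqrt; auto. nra. Qed.
Lemma Cmod_sq_mul : forall x, Cmod x * Cmod x = re x * re x + im x * im x.
Proof. intros. pose proof (Cmod_sq x). simpl in H. nra. Qed.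
Lemma Cmod_mul : forall x y, Cmod (Cmul x y) = Cmod x * Cmod y.
Proof.
  intros; unfold Cmod. rewrite <- sqrt_mult by nra. f_equal. simpl; ring.
Qed.
Lemma Cmod_conj : forall x, Cmod (Cconj x) = Cmod x.
Proof. intros; unfold Cmod; simpl; f_equal; ring. Qed.
Lemma Cmod_opp : forall x, Cmod (Copp x) = Cmod x.
Proof. intros; unfold Cmod; simpl; f_equal; ring. Qed.
Lemma Cmod_re : forall x, Rabs (re x) <= Cmod x.
Proof.
  intros; unfold Cmod. rewrite <- sqrt_Rsqr_abs. apply sqrt_le_1_alt. unfold Rsqr; nra.
Qed.
Lemma Cmod_im : forall x, Rabs (im x) <= Cmod x.
Proof.
  intros; unfold Cmod. rewrite <- sqrt_Rsqr_abs. apply sqrt_le_1_alt. unfold Rsqr; nra.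
Qed.
Lemma Cmod_real : forall r, Cmod (mkC r 0) = Rabs r.
Proof. intros; unfold Cmod; simpl. rewrite <- sqrt_Rsqr_abs. f_equal. unfold Rsqr; ring. Qed.
Lemma Cmod_C0 : Cmod C0 = 0.
Proof. unfold C0. rewrite Cmod_real, Rabs_R0; auto. Qed.
Lemma Cmod_C1 : Cmod C1 = 1.
Proof. unfold C1. rewrite Cmod_real, Rabs_R1; auto. Qed.
Lemma Cmod_scal : forall r x, Cmod (Cscal r x) = Rabs r * Cmod x.
Proof. intros. rewrite Cscal_mul, Cmod_mul, Cmod_real; auto. Qed.
Lemma Cmod_add : forall x y, Cmod (Cadd x y) <= Cmod x + Cmod y.
Proof.
  intros [a b] [c d]. unfold Cmod; simpl.
  pose proof (Cauchy_Schwarz_sqrt 2 (fun i => match i with O => a | _ => b end) (fun i => match i with O => c | _ => d end)) as H.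
  simpl in H. replace (0 + a * c + b * d) with (a*c+b*d) in H by ring.
  replace (0 + a * a + b * b) with (a^2+b^2) in H by ring.
  replace (0 + c * c + d * d) with (c^2+d^2) in H by ring.
  apply Rsqr_incr_0_var. 2: apply Rplus_le_le_0_compat; apply sqrt_pos.
  unfold Rsqr. rewrite sqrt_sqrt by (apply Rplus_le_le_0_compat; apply pow2_ge_0).
  pose proof (sqrt_sqrt (a^2+b^2) ltac:(apply Rplus_le_le_0_compat; apply pow2_ge_0)).
  pose proof (sqrt_sqrt (c^2+d^2) ltac:(apply Rplus_le_le_0_compat; apply pow2_ge_0)).
  set (s1 := sqrt (a^2+b^2)) in *. set (s2 := sqrt (c^2+d^2)) in *. simpl in *. fold s1 s2. clearbody s1 s2. nra.
Qed.
Lemma Cmod_sub : forall x y, Cmod (Csub x y) <= Cmod x + Cmod y.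
Proof. intros. unfold Csub. rewrite <- (Cmod_opp y). apply Cmod_add. Qed.
Lemma Cmod_Csum : forall n f, Cmod (Csum n f) <= Rsum n (fun i => Cmod (f i)).
Proof.
  induction n; simpl; intros. rewrite Cmod_C0; lra.
  eapply Rle_trans. apply Cmod_add. specialize (IHn f). lra.
Qed.
Lemma Cmod_eq0 : forall x, Cmod x = 0 -> x = C0.
Proof.
  intros. pose proof (Cmod_sq_mul x). rewrite H in H0.
  pose proof (Rle_0_sqr (re x)). pose proof (Rle_0_sqr (im x)). unfold Rsqr in *.
  apply Cext; simpl; apply Rsqr_0_uniq; unfold Rsqr; lra.
Qed.
Lemma Cmul_conj_self : forall x, Cmul (Cconj x) x = mkC (Cmod x * Cmod x) 0.
Proof. intros. rewrite Cmod_sq_mul. cx. Qed.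

Definition vsq (n : nat) (v : vec) : R := Rsum n (fun i => Cmod (v i) * Cmod (v i)).
Lemma vsq_ge0 : forall n v, 0 <= vsq n v.
Proof. intros; apply Rsum_nonneg; intros; pose proof (Cmod_ge0 (v i)); nra. Qed.
Lemma vnorm_eq : forall n v, vnorm n v = sqrt (vsq n v).
Proof.
  intros; unfold vnorm, vsq. rewrite re_Csum. f_equal. apply Rsum_ext; intros; simpl; ring.
Qed.
Lemma vnorm_ge0 : forall n v, 0 <= vnorm n v.
Proof. intros; rewrite vnorm_eq; apply sqrt_pos. Qed.
Lemma vnorm_sq : forall n v, vnorm n v * vnorm n v = vsq n v.
Proof. intros; rewrite vnorm_eq; apply sqrt_sqrt, vsq_ge0. Qed.
Lemma vnorm_ext : forall n v w, (forall i, (i < n)%nat -> v i = w i) -> vnorm n v = vnorm n w.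
Proof. intros. rewrite !vnorm_eq. unfold vsq. f_equal. apply Rsum_ext; intros; rewrite H; auto. Qed.
Lemma vnorm_le_sq : forall n v w c, 0 <= c -> vsq n v <= c * c * vsq n w -> vnorm n v <= c * vnorm n w.
Proof.
  intros. rewrite !vnorm_eq. rewrite <- (sqrt_square c) at 1 by auto.
  rewrite <- sqrt_mult by (try nra; apply vsq_ge0). apply sqrt_le_1_alt. auto.
Qed.
Lemma vnorm_cmul : forall n c v, vnorm n (fun i => Cmul c (v i)) = Cmod c * vnorm n v.
Proof.
  intros. rewrite !vnorm_eq. rewrite <- (sqrt_square (Cmod c)) at 1 by apply Cmod_ge0.
  rewrite <- sqrt_mult by (try apply vsq_ge0; pose proof (Cmod_ge0 c); nra).
  f_equal. unfold vsq. rewrite <- Rsum_scal. apply Rsum_ext; intros. rewrite Cmod_mul; ring.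
Qed.
Lemma vnorm_scal : forall n r v, vnorm n (fun i => Cscal r (v i)) = Rabs r * vnorm n v.
Proof.
  intros. rewrite <- Cmod_real, <- vnorm_cmul. apply vnorm_ext; intros; apply Cscal_mul.
Qed.
Lemma vnorm_zero : forall n v, vnorm n v = 0 -> forall i, (i < n)%nat -> v i = C0.
Proof.
  intros. rewrite vnorm_eq in H. apply sqrt_eq_0 in H; [|apply vsq_ge0].
  apply Cmod_eq0. unfold vsq in H.
  pose proof (Rsum_single_le n (fun i => Cmod (v i) * Cmod (v i)) i H0 (fun j _ => ltac:(pose proof (Cmod_ge0 (v j)); nra))).
  simpl in H1. pose proof (Cmod_ge0 (v i)). nra.
Qed.

Definition cip (n : nat) (v w : vec) : Cx := Csum n (fun i => Cmul (Cconj (v i)) (w i)).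
Lemma cip_self : forall n v, cip n v v = mkC (vsq n v) 0.
Proof.
  intros. unfold cip, vsq. apply Cext.
  rewrite re_Csum. apply Rsum_ext; intros. rewrite Cmul_conj_self; auto.
  rewrite im_Csum. transitivity 0; [|reflexivity]. rewrite <- (Rsum_zero n). apply Rsum_ext; intros. rewrite Cmul_conj_self; auto.
Qed.
Lemma Cmod_cip : forall n v w, Cmod (cip n v w) <= vnorm n v * vnorm n w.
Proof.
  intros. eapply Rle_trans. apply Cmod_Csum.
  rewrite !vnorm_eq. unfold vsq.
  eapply Rle_trans; [|apply (Cauchy_Schwarz_sqrt n (fun i => Cmod (v i)) (fun i => Cmod (w i)))].
  apply Rsum_le; intros. rewrite Cmod_mul, Cmod_conj. lra.
Qed.
Lemma vnorm_add : forall n v w, vnorm n (fun i => Cadd (v i) (w i)) <= vnorm n v + vnorm n w.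
Proof.
  intros. pose proof (vnorm_ge0 n v). pose proof (vnorm_ge0 n w).
  pose proof (vnorm_ge0 n (fun i => Cadd (v i) (w i))).
  apply Rsqr_incr_0_var; auto. 2: lra. unfold Rsqr.
  rewrite vnorm_sq.
  assert (vsq n (fun i => Cadd (v i) (w i)) <= vsq n v + vsq n w + 2 * Rsum n (fun i => Cmod (v i) * Cmod (w i))).
  { unfold vsq. rewrite <- Rsum_scal, <- !Rsum_add. apply Rsum_le; intros.
    pose proof (Cmod_add (v i) (w i)). pose proof (Cmod_ge0 (Cadd (v i) (w i))).
    pose proof (Cmod_ge0 (v i)). pose proof (Cmod_ge0 (w i)). nra. }
  pose proof (Cauchy_Schwarz_sqrt n (fun i => Cmod (v i)) (fun i => Cmod (w i))). simpl in H3.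
  assert (H4 : Rsum n (fun i => Cmod (v i) * Cmod (w i)) <= vnorm n v * vnorm n w).
  { rewrite !vnorm_eq. exact H3. }
  rewrite <- (vnorm_sq n v), <- (vnorm_sq n w) in H2.
  set (S := Rsum n (fun i => Cmod (v i) * Cmod (w i))) in *. set (a := vnorm n v) in *.
  set (b := vnorm n w) in *. clearbody S a b. nra.
Qed.
Lemma vnorm_opp : forall n v, vnorm n (fun i => Copp (v i)) = vnorm n v.
Proof. intros. rewrite !vnorm_eq. unfold vsq. f_equal. apply Rsum_ext; intros. rewrite Cmod_opp; auto. Qed.
Lemma vnorm_sub : forall n v w, vnorm n (fun i => Csub (v i) (w i)) <= vnorm n v + vnorm n w.
Proof. intros. unfold Csub. rewrite <- (vnorm_opp n w). apply (vnorm_add n v (fun i => Copp (w i))). Qed.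
Lemma vnorm_Csum : forall n m (F : nat -> vec),
  vnorm n (fun i => Csum m (fun l => F l i)) <= Rsum m (fun l => vnorm n (F l)).
Proof.
  induction m; simpl; intros.
  - rewrite vnorm_eq. unfold vsq. rewrite (Rsum_ext _ _ (fun _ => 0)), Rsum_zero, sqrt_0; [lra|].
    intros; rewrite Cmod_C0; ring.
  - eapply Rle_trans. apply (vnorm_add n (fun i => Csum m (fun l => F l i)) (F m)).
    specialize (IHm F). lra.
Qed.

Lemma mapply_ext : forall n A B v w, meq n A B -> (forall i, (i < n)%nat -> v i = w i) ->
  forall i, (i < n)%nat -> mapply n A v i = mapply n B w i.
Proof. intros. unfold mapply. apply Csum_ext; intros. rewrite H, H0; auto. Qed.
Lemma mapply_cmul : forall n A c v i, mapply n A (fun k => Cmul c (v k)) i = Cmul c (mapply n A v i).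
Proof. intros; unfold mapply. rewrite <- Csum_mul_l. apply Csum_ext; intros; ring. Qed.
Lemma mapply_madd : forall n A B v i, mapply n (madd A B) v i = Cadd (mapply n A v i) (mapply n B v i).
Proof. intros; unfold mapply, madd. rewrite <- Csum_add. apply Csum_ext; intros; ring. Qed.
Definition msub (A B : mat) : mat := fun i j => Csub (A i j) (B i j).
Lemma mapply_msub : forall n A B v i, mapply n (msub A B) v i = Csub (mapply n A v i) (mapply n B v i).
Proof. intros; unfold mapply, msub. rewrite <- Csum_sub. apply Csum_ext; intros; unfold Csub; ring. Qed.
Lemma mapply_mscal : forall n r A v i, mapply n (mscal r A) v i = Cscal r (mapply n A v i).
Proof. intros; unfold mapply, mscal. rewrite <- Csum_scal. apply Csum_ext; intros. rewrite !Cscal_mul; ring. Qed.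
Lemma mapply_mmul : forall n A B v i, mapply n (mmul n A B) v i = mapply n A (mapply n B v) i.
Proof.
  intros; unfold mapply, mmul.
  transitivity (Csum n (fun k => Csum n (fun l => Cmul (A i l) (Cmul (B l k) (v k))))).
  apply Csum_ext; intros. rewrite <- Csum_mul_r. apply Csum_ext; intros; ring.
  rewrite Csum_swap. apply Csum_ext; intros. rewrite Csum_mul_l; auto.
Qed.

Definition frobenius (n : nat) (X : mat) : R :=
  sqrt (Rsum n (fun i => Rsum n (fun k => Cmod (X i k) * Cmod (X i k)))).
Lemma frobenius_bound : forall n X v, vnorm n (mapply n X v) <= frobenius n X * vnorm n v.
Proof.
  intros. rewrite vnorm_eq. unfold frobenius. rewrite vnorm_eq.
  rewrite <- sqrt_mult. 2: apply Rsum_nonneg; intros; apply Rsum_nonneg; intros; pose proof (Cmod_ge0 (X i i0)); nra.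
  2: apply vsq_ge0.
  apply sqrt_le_1_alt. unfold vsq at 1. rewrite Rmult_comm, <- Rsum_scal. apply Rsum_le; intros.
  unfold mapply. pose proof (Cmod_Csum n (fun k => Cmul (X i k) (v k))).
  pose proof (Cauchy_Schwarz_sqrt n (fun k => Cmod (X i k)) (fun k => Cmod (v k))). simpl in H1.
  assert (Hs : Rsum n (fun i0 : nat => Cmod (Cmul (X i i0) (v i0))) = Rsum n (fun k => Cmod (X i k) * Cmod (v k))).
  { apply Rsum_ext; intros; apply Cmod_mul. }
  cbv beta in H0. rewrite Hs in H0. pose proof (Cmod_ge0 (Csum n (fun k : nat => Cmul (X i k) (v k)))).
  assert (H3 : Cmod (Csum n (fun k : nat => Cmul (X i k) (v k))) <= sqrt (Rsum n (fun k => Cmod (X i k) * Cmod (X i k))) * sqrt (vsq n v)) by (unfold vsq; lra).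
  pose proof (sqrt_sqrt (Rsum n (fun k => Cmod (X i k) * Cmod (X i k))) ltac:(apply Rsum_nonneg; intros; pose proof (Cmod_ge0 (X i i0)); nra)).
  pose proof (sqrt_sqrt (vsq n v) (vsq_ge0 n v)).
  set (a := sqrt (Rsum n (fun k => Cmod (X i k) * Cmod (X i k)))) in *.
  set (b := sqrt (vsq n v)) in *.
  assert (0 <= a) by apply sqrt_pos. assert (0 <= b) by apply sqrt_pos.
  rewrite <- H4, <- H5. clearbody a b. nra.
Qed.

Definition unit_vec (j : nat) : vec := fun i => if Nat.eqb i j then C1 else C0.
Lemma vnorm_unit_vec : forall n j, (j < n)%nat -> vnorm n (unit_vec j) = 1.
Proof.
  intros. rewrite vnorm_eq. unfold vsq. rewrite (Rsum_single n _ j); auto.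
  unfold unit_vec; rewrite Nat.eqb_refl, Cmod_C1, Rmult_1_l; apply sqrt_1.
  intros. unfold unit_vec. rewrite (proj2 (Nat.eqb_neq i j) H1), Cmod_C0; ring.
Qed.
Lemma mapply_unit_vec : forall n X i j, (j < n)%nat -> mapply n X (unit_vec j) i = X i j.
Proof.
  intros. unfold mapply. rewrite (Csum_single n _ j); auto.
  unfold unit_vec; rewrite Nat.eqb_refl; ring.
  intros. unfold unit_vec. rewrite (proj2 (Nat.eqb_neq i0 j) H1). ring.
Qed.

Lemma opnorm_spec : forall n X, (0 < n)%nat ->
  0 <= opnorm n X /\ (forall v, vnorm n (mapply n X v) <= opnorm n X * vnorm n v) /\
  (forall c, (forall v, vnorm n v = 1 -> vnorm n (mapply n X v) <= c) -> opnorm n X <= c).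
Proof.
  intros n X Hn.
  assert (Hb : bound (opnorm_set n X)).
  { exists (frobenius n X). intros r [v [Hv ->]]. pose proof (frobenius_bound n X v). rewrite Hv in H; lra. }
  assert (Hne : exists r, opnorm_set n X r).
  { exists (vnorm n (mapply n X (unit_vec 0))). exists (unit_vec 0); split; auto. apply vnorm_unit_vec; auto. }
  unfold opnorm. destruct (excluded_middle_informative _) as [H|H]; [|tauto].
  destruct (completeness _ _ _) as [s [Hs1 Hs2]]. simpl.
  assert (Hunit : forall v, vnorm n v = 1 -> vnorm n (mapply n X v) <= s).
  { intros. apply Hs1. exists v; auto. }
  split; [|split].
  - eapply Rle_trans; [apply vnorm_ge0|apply (Hunit (unit_vec 0))]. apply vnorm_unit_vec; auto.
  - intros v. destruct (Req_dec (vnorm n v) 0) as [Hz|Hz].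
    + rewrite Hz. rewrite (vnorm_ext n _ (fun _ => C0)).
      rewrite vnorm_eq; unfold vsq. rewrite (Rsum_ext _ _ (fun _ => 0)), Rsum_zero, sqrt_0. lra.
      intros; rewrite Cmod_C0; ring.
      intros. unfold mapply. rewrite (Csum_ext _ _ (fun _ => C0)), Csum_zero; auto.
      intros k Hk. rewrite (vnorm_zero n v Hz k Hk); ring.
    + pose proof (vnorm_ge0 n v).
      set (c := mkC (/ vnorm n v) 0).
      assert (Hu : vnorm n (fun i => Cmul c (v i)) = 1).
      { rewrite vnorm_cmul. unfold c. rewrite Cmod_real, Rabs_right. field; auto.
        apply Rle_ge, Rlt_le, Rinv_0_lt_compat; lra. }
      specialize (Hunit _ Hu).
      rewrite (vnorm_ext n (mapply n X (fun i => Cmul c (v i))) (fun i => Cmul c (mapply n X v i))) in Hunit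
        by (intros; apply mapply_cmul).
      rewrite vnorm_cmul in Hunit. unfold c in Hunit. rewrite Cmod_real, Rabs_right in Hunit.
      apply (Rmult_le_compat_r (vnorm n v)) in Hunit; auto.
      replace (/ vnorm n v * vnorm n (mapply n X v) * vnorm n v) with (vnorm n (mapply n X v)) in Hunit
        by (field; auto). auto.
      apply Rle_ge, Rlt_le, Rinv_0_lt_compat; lra.
  - intros c Hc. apply Hs2. intros r [v [Hv ->]]. apply Hc; auto.
Qed.

Lemma opnorm_ge0 : forall n X, (0 < n)%nat -> 0 <= opnorm n X.
Proof. intros; apply opnorm_spec; auto. Qed.
Lemma opnorm_bound : forall n X v, (0 < n)%nat -> vnorm n (mapply n X v) <= opnorm n X * vnorm n v.
Proof. intros; apply opnorm_spec; auto. Qed.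
Lemma opnorm_le : forall n X c, (0 < n)%nat -> 0 <= c ->
  (forall v, vnorm n (mapply n X v) <= c * vnorm n v) -> opnorm n X <= c.
Proof.
  intros. apply opnorm_spec; auto. intros. rewrite <- (Rmult_1_r c), <- H2; auto.
Qed.
Lemma opnorm_meq : forall n X Y, (0 < n)%nat -> meq n X Y -> opnorm n X <= opnorm n Y.
Proof.
  intros. apply opnorm_le; auto. apply opnorm_ge0; auto. intros.
  rewrite (vnorm_ext n _ (mapply n Y v)). apply opnorm_bound; auto.
  intros; apply mapply_ext; auto.
Qed.
Lemma opnorm_madd : forall n A B, (0 < n)%nat -> opnorm n (madd A B) <= opnorm n A + opnorm n B.
Proof.
  intros. apply opnorm_le; auto. pose proof (opnorm_ge0 n A H); pose proof (opnorm_ge0 n B H); lra.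
  intros. rewrite (vnorm_ext n _ (fun i => Cadd (mapply n A v i) (mapply n B v i))) by (intros; apply mapply_madd).
  eapply Rle_trans. apply vnorm_add. pose proof (opnorm_bound n A v H). pose proof (opnorm_bound n B v H). lra.
Qed.
Lemma opnorm_msub : forall n A B, (0 < n)%nat -> opnorm n (msub A B) <= opnorm n A + opnorm n B.
Proof.
  intros. apply opnorm_le; auto. pose proof (opnorm_ge0 n A H); pose proof (opnorm_ge0 n B H); lra.
  intros. rewrite (vnorm_ext n _ (fun i => Csub (mapply n A v i) (mapply n B v i))) by (intros; apply mapply_msub).
  eapply Rle_trans. apply vnorm_sub. pose proof (opnorm_bound n A v H). pose proof (opnorm_bound n B v H). lra.
Qed.
Lemma opnorm_mscal : forall n r A, (0 < n)%nat -> opnorm n (mscal r A) <= Rabs r * opnorm n A.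
Proof.
  intros. apply opnorm_le; auto. pose proof (opnorm_ge0 n A H); pose proof (Rabs_pos r); nra.
  intros. rewrite (vnorm_ext n _ (fun i => Cscal r (mapply n A v i))) by (intros; apply mapply_mscal).
  rewrite vnorm_scal. pose proof (opnorm_bound n A v H). pose proof (Rabs_pos r).
  rewrite Rmult_assoc. apply Rmult_le_compat_l; auto.
Qed.
Lemma opnorm_mmul : forall n A B, (0 < n)%nat -> opnorm n (mmul n A B) <= opnorm n A * opnorm n B.
Proof.
  intros. apply opnorm_le; auto. pose proof (opnorm_ge0 n A H); pose proof (opnorm_ge0 n B H); nra.
  intros. rewrite (vnorm_ext n _ (mapply n A (mapply n B v))) by (intros; apply mapply_mmul).
  eapply Rle_trans. apply opnorm_bound; auto. rewrite Rmult_assoc. apply Rmult_le_compat_l.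
  apply opnorm_ge0; auto. apply opnorm_bound; auto.
Qed.
Lemma opnorm_mid : forall n, (0 < n)%nat -> opnorm n mid <= 1.
Proof.
  intros. apply opnorm_le; auto; try lra. intros. rewrite (vnorm_ext n _ v). lra.
  intros. unfold mapply, mid. rewrite (Csum_single n _ i); auto. rewrite Nat.eqb_refl; ring.
  intros k Hk Hne. rewrite (proj2 (Nat.eqb_neq i k)) by lia. ring.
Qed.
Lemma opnorm_mzero : forall n, (0 < n)%nat -> opnorm n mzero <= 0.
Proof.
  intros. apply opnorm_le; auto; try lra. intros. rewrite (vnorm_ext n _ (fun _ => C0)).
  rewrite vnorm_eq; unfold vsq. rewrite (Rsum_ext _ _ (fun _ => 0)), Rsum_zero, sqrt_0. lra.
  intros; rewrite Cmod_C0; ring.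
  intros. unfold mapply, mzero. transitivity (Csum n (fun _ => C0)); [apply Csum_ext; intros; ring | apply Csum_zero].
Qed.
Lemma opnorm_entry : forall n X i j, (i < n)%nat -> (j < n)%nat -> Cmod (X i j) <= opnorm n X.
Proof.
  intros. assert (0 < n)%nat by lia.
  pose proof (opnorm_bound n X (unit_vec j) H1). rewrite vnorm_unit_vec, Rmult_1_r in H2 by auto.
  eapply Rle_trans; [|apply H2]. rewrite vnorm_eq. unfold vsq.
  rewrite <- (sqrt_square (Cmod (X i j))) by apply Cmod_ge0. apply sqrt_le_1_alt.
  rewrite <- (mapply_unit_vec n X i j) by auto.
  apply (Rsum_single_le n (fun i0 => Cmod (mapply n X (unit_vec j) i0) * Cmod (mapply n X (unit_vec j) i0)) i); auto.
  intros. pose proof (Cmod_ge0 (mapply n X (unit_vec j) i0)). nra.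
Qed.

Lemma cip_adj : forall n X v w, cip n v (mapply n X w) = cip n (mapply n (madj X) v) w.
Proof.
  intros. unfold cip, mapply, madj.
  transitivity (Csum n (fun i => Csum n (fun k => Cmul (Cmul (Cconj (v i)) (X i k)) (w k)))).
  apply Csum_ext; intros. rewrite <- Csum_mul_l. apply Csum_ext; intros; ring.
  rewrite Csum_swap. apply Csum_ext; intros. rewrite Cconj_Csum, <- Csum_mul_r. apply Csum_ext; intros.
  rewrite Cconj_mul, Cconj_conj. ring.
Qed.
Lemma opnorm_adj : forall n X, (0 < n)%nat -> opnorm n (madj X) <= opnorm n X.
Proof.
  intros. apply opnorm_le; auto. apply opnorm_ge0; auto. intros w.
  set (y := mapply n (madj X) w).
  assert (Hy : vsq n y <= opnorm n X * vnorm n y * vnorm n w).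
  { pose proof (cip_self n y). pose proof (cip_adj n (madj X) y w).
    assert (madj (madj X) = X) as E.
    { unfold madj. do 2 (apply FunctionalExtensionality.functional_extensionality; intro). apply Cconj_conj. }
    rewrite E in H1. fold y in H1. rewrite H0 in H1.
    pose proof (Cmod_cip n (mapply n X y) w). rewrite <- H1, Cmod_real, Rabs_right in H2 by (apply Rle_ge, vsq_ge0).
    pose proof (opnorm_bound n X y H). pose proof (vnorm_ge0 n w).
    eapply Rle_trans. apply H2. apply Rmult_le_compat_r; auto. }
  rewrite <- vnorm_sq in Hy. pose proof (vnorm_ge0 n y). pose proof (vnorm_ge0 n w).
  pose proof (opnorm_ge0 n X H).
  destruct (Req_dec (vnorm n y) 0). rewrite H3; nra.
  apply (Rmult_le_reg_l (vnorm n y)). lra. nra.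
Qed.

Lemma meq_refl : forall n A, meq n A A. Proof. red; auto. Qed.
Lemma meq_trans : forall n A B C, meq n A B -> meq n B C -> meq n A C.
Proof. unfold meq; intros; rewrite H; auto. Qed.
Lemma mmul_meq : forall n A A' B B', meq n A A' -> meq n B B' -> meq n (mmul n A B) (mmul n A' B').
Proof. unfold meq, mmul; intros. apply Csum_ext; intros. rewrite H, H0; auto. Qed.
Lemma madd_meq : forall n A A' B B', meq n A A' -> meq n B B' -> meq n (madd A B) (madd A' B').
Proof. unfold meq, madd; intros. rewrite H, H0; auto. Qed.
Lemma madj_meq : forall n A A', meq n A A' -> meq n (madj A) (madj A').
Proof. unfold meq, madj; intros. rewrite H; auto. Qed.
Lemma mmul_madd_l : forall n A B C, meq n (mmul n (madd A B) C) (madd (mmul n A C) (mmul n B C)).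
Proof. unfold meq, mmul, madd; intros. rewrite <- Csum_add. apply Csum_ext; intros; ring. Qed.
Lemma mmul_madd_r : forall n A B C, meq n (mmul n A (madd B C)) (madd (mmul n A B) (mmul n A C)).
Proof. unfold meq, mmul, madd; intros. rewrite <- Csum_add. apply Csum_ext; intros; ring. Qed.
Lemma mmul_mid_l : forall n A, meq n (mmul n mid A) A.
Proof.
  unfold meq, mmul, mid; intros. rewrite (Csum_single n _ i); auto. rewrite Nat.eqb_refl; ring.
  intros k Hk Hne. rewrite (proj2 (Nat.eqb_neq i k)) by lia. ring.
Qed.
Lemma mmul_mid_r : forall n A, meq n (mmul n A mid) A.
Proof.
  unfold meq, mmul, mid; intros. rewrite (Csum_single n _ j); auto. rewrite Nat.eqb_refl; ring.
  intros k Hk Hne. rewrite (proj2 (Nat.eqb_neq k j)) by lia. ring.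
Qed.
Lemma madj_mid : forall n, meq n (madj mid) mid.
Proof. unfold meq, madj, mid; intros. rewrite Nat.eqb_sym. destruct (Nat.eqb i j); cx. Qed.

Lemma rank_le_mono : forall n X p q, rank_le n X p -> (p <= q)%nat -> rank_le n X q.
Proof.
  intros n X p q [U [V HUV]] Hpq.
  exists (fun i k => if Nat.ltb k p then U i k else C0), V. red; intros.
  rewrite HUV by auto. replace q with (p + (q - p))%nat by lia. rewrite Csum_split.
  rewrite (Csum_ext (q - p) _ (fun _ => C0)), Csum_zero.
  transitivity (Cadd (Csum p (fun k => Cmul (U i k) (V k j))) C0). cx. f_equal.
  apply Csum_ext; intros. rewrite (proj2 (Nat.ltb_lt i0 p)) by auto; auto.
  intros. rewrite (proj2 (Nat.ltb_ge (p + i0) p)) by lia. ring.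
Qed.
Lemma rank_le_madd : forall n X Y p q, rank_le n X p -> rank_le n Y q -> rank_le n (madd X Y) (p + q).
Proof.
  intros n X Y p q [U1 [V1 H1]] [U2 [V2 H2]].
  exists (fun i k => if Nat.ltb k p then U1 i k else U2 i (k - p)%nat),
         (fun k j => if Nat.ltb k p then V1 k j else V2 (k - p)%nat j).
  red; intros. unfold madd. rewrite H1, H2 by auto. rewrite Csum_split. f_equal.
  apply Csum_ext; intros. rewrite (proj2 (Nat.ltb_lt i0 p)) by auto; auto.
  apply Csum_ext; intros. rewrite (proj2 (Nat.ltb_ge (p + i0) p)) by lia.
  replace (p + i0 - p)%nat with i0 by lia. auto.
Qed.
Lemma rank_le_mmul_l : forall n Z X p, rank_le n X p -> rank_le n (mmul n Z X) p.
Proof.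
  intros n Z X p [U [V H]]. exists (mmul n Z U), V. red; intros.
  rewrite (mmul_meq n Z Z X _ (meq_refl n Z) H) by auto. unfold mmul.
  transitivity (Csum n (fun k => Csum p (fun l => Cmul (Z i k) (Cmul (U k l) (V l j))))).
  apply Csum_ext; intros. rewrite <- Csum_mul_l. auto.
  rewrite Csum_swap. apply Csum_ext; intros. rewrite <- Csum_mul_r. apply Csum_ext; intros; ring.
Qed.
Lemma rank_le_mmul_r : forall n Z X p, rank_le n X p -> rank_le n (mmul n X Z) p.
Proof.
  intros n Z X p [U [V H]]. exists U, (fun l j => Csum n (fun k => Cmul (V l k) (Z k j))). red; intros.
  rewrite (mmul_meq n X _ Z Z H (meq_refl n Z)) by auto. unfold mmul.
  transitivity (Csum n (fun k => Csum p (fun l => Cmul (U i l) (Cmul (V l k) (Z k j))))).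
  apply Csum_ext; intros. rewrite <- Csum_mul_r. apply Csum_ext; intros; ring.
  rewrite Csum_swap. apply Csum_ext; intros. rewrite <- Csum_mul_l. auto.
Qed.
Lemma rank_le_madj : forall n X p, rank_le n X p -> rank_le n (madj X) p.
Proof.
  intros n X p [U [V H]]. exists (madj V), (madj U). red; intros. unfold madj.
  rewrite H by auto. rewrite Cconj_Csum. apply Csum_ext; intros. rewrite Cconj_mul; ring.
Qed.
Lemma rank_le_mscal : forall n r X p, rank_le n X p -> rank_le n (mscal r X) p.
Proof.
  intros n r X p [U [V H]]. exists (mscal r U), V. red; intros. unfold mscal.
  rewrite H by auto. rewrite <- Csum_scal. apply Csum_ext; intros. rewrite !Cscal_mul; ring.
Qed.
Lemma rank_le_mzero : forall n p, rank_le n mzero p.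
Proof.
  intros. apply (rank_le_mono n mzero 0); [|lia]. exists mzero, mzero. red; intros. reflexivity.
Qed.

Definition rank_norm_split (n : nat) (X : mat) (r : nat) (e : R) : Prop :=
  exists R E, meq n X (madd R E) /\ rank_le n R r /\ opnorm n E <= e.

Lemma rank_norm_split_ge0 : forall n X r e, (0 < n)%nat -> rank_norm_split n X r e -> 0 <= e.
Proof. intros n X r e Hn [R [E [_ [_ HE]]]]. pose proof (opnorm_ge0 n E Hn). lra. Qed.

Lemma rank_norm_split_meq : forall n X Y r e, meq n X Y ->
  rank_norm_split n Y r e -> rank_norm_split n X r e.
Proof. intros n X Y r e HXY [R [E [H HRE]]]. exists R, E. split; auto. eapply meq_trans; eauto. Qed.

Lemma rank_norm_split_mono : forall n X r r' e e', (r <= r')%nat -> e <= e' ->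
  rank_norm_split n X r e -> rank_norm_split n X r' e'.
Proof.
  intros n X r r' e e' Hr He [R [E [H [HR HE]]]]. exists R, E.
  split; [|split]; auto. eapply rank_le_mono; eauto. lra.
Qed.

Lemma rank_norm_split_of_opnorm : forall n X r e, opnorm n X <= e -> rank_norm_split n X r e.
Proof.
  intros. exists mzero, X. split; [|split]; auto.
  - intros i j _ _. unfold madd, mzero. cx.
  - apply rank_le_mzero.
Qed.

Lemma rank_norm_split_madd : forall n X Y r r' e e', (0 < n)%nat ->
  rank_norm_split n X r e -> rank_norm_split n Y r' e' ->
  rank_norm_split n (madd X Y) (r + r') (e + e').
Proof.
  intros n X Y r r' e e' Hn [R [E [H [HR HE]]]] [R' [E' [H' [HR' HE']]]].
  exists (madd R R'), (madd E E'). split; [|split].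
  - intros i j Hi Hj. unfold madd. rewrite H, H' by auto. unfold madd. ring.
  - apply rank_le_madd; auto.
  - eapply Rle_trans. apply opnorm_madd; auto. lra.
Qed.

Lemma rank_norm_split_mscal : forall n c X r e, (0 < n)%nat ->
  rank_norm_split n X r e -> rank_norm_split n (mscal c X) r (Rabs c * e).
Proof.
  intros n c X r e Hn [R [E [H [HR HE]]]]. exists (mscal c R), (mscal c E). split; [|split].
  - intros i j Hi Hj. unfold mscal, madd. rewrite H by auto. unfold madd. rewrite !Cscal_mul. ring.
  - apply rank_le_mscal; auto.
  - eapply Rle_trans. apply opnorm_mscal; auto. apply Rmult_le_compat_l; auto. apply Rabs_pos.
Qed.

Lemma rank_norm_split_mmul_l : forall n Z X r e, (0 < n)%nat ->
  rank_norm_split n X r e -> rank_norm_split n (mmul n Z X) r (opnorm n Z * e).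
Proof.
  intros n Z X r e Hn [R [E [H [HR HE]]]]. exists (mmul n Z R), (mmul n Z E). split; [|split].
  - eapply meq_trans. apply mmul_meq. apply meq_refl. apply H. apply mmul_madd_r.
  - apply rank_le_mmul_l; auto.
  - eapply Rle_trans. apply opnorm_mmul; auto. apply Rmult_le_compat_l; auto. apply opnorm_ge0; auto.
Qed.

Lemma rank_norm_split_mmul_r : forall n Z X r e, (0 < n)%nat ->
  rank_norm_split n X r e -> rank_norm_split n (mmul n X Z) r (e * opnorm n Z).
Proof.
  intros n Z X r e Hn [R [E [H [HR HE]]]]. exists (mmul n R Z), (mmul n E Z). split; [|split].
  - eapply meq_trans. apply mmul_meq. apply H. apply meq_refl. apply mmul_madd_l.
  - apply rank_le_mmul_r; auto.
  - eapply Rle_trans. apply opnorm_mmul; auto. apply Rmult_le_compat_r; auto. apply opnorm_ge0; auto.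
Qed.

Lemma opnorm_mpow : forall n X k, (0 < n)%nat -> opnorm n (mpow n X k) <= opnorm n X ^ k.
Proof.
  induction k; simpl; intros. apply opnorm_mid; auto.
  eapply Rle_trans. apply opnorm_mmul; auto. apply Rmult_le_compat_l. apply opnorm_ge0; auto. auto.
Qed.

Definition cos_majorant (B : R) (m : nat) : R := B ^ (2 * m) / INR (fact (2 * m)).
Lemma cos_majorant_ge0 : forall B m, 0 <= B -> 0 <= cos_majorant B m.
Proof.
  intros. unfold cos_majorant. apply Rmult_le_pos. apply pow_le; auto.
  apply Rlt_le, Rinv_0_lt_compat, lt_0_INR, lt_O_fact.
Qed.

Definition cos_term (n : nat) (X : mat) (m : nat) : mat :=
  mscal ((-1) ^ m / INR (fact (2 * m))) (mpow n X (2 * m)).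
Lemma opnorm_cos_term : forall n X B m, (0 < n)%nat -> opnorm n X <= B ->
  opnorm n (cos_term n X m) <= cos_majorant B m.
Proof.
  intros. unfold cos_term, cos_majorant. eapply Rle_trans. apply opnorm_mscal; auto.
  assert (Rabs ((-1) ^ m / INR (fact (2 * m))) = / INR (fact (2*m))).
  { unfold Rdiv. rewrite Rabs_mult, pow_1_abs, Rmult_1_l. apply Rabs_right.
    apply Rle_ge, Rlt_le, Rinv_0_lt_compat, lt_0_INR, lt_O_fact. }
  rewrite H1. rewrite Rmult_comm. unfold Rdiv. apply Rmult_le_compat_r.
  apply Rlt_le, Rinv_0_lt_compat, lt_0_INR, lt_O_fact.
  eapply Rle_trans. apply opnorm_mpow; auto. apply pow_incr. split; auto. apply opnorm_ge0; auto.
Qed.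

Lemma cos_partial_S : forall n X p, cos_partial n X (S p) = madd (cos_partial n X p) (cos_term n X (S p)).
Proof. reflexivity. Qed.

Lemma opnorm_cos_partial_sub : forall n X B L j, (0 < n)%nat -> opnorm n X <= B ->
  opnorm n (msub (cos_partial n X (L + j)) (cos_partial n X L)) <= Rsum j (fun i => cos_majorant B (L + 1 + i)).
Proof.
  induction j; intros; simpl.
  - rewrite Nat.add_0_r. eapply Rle_trans; [|apply (opnorm_mzero n H)].
    apply opnorm_meq; auto. red; intros; unfold msub, mzero, Csub; cx.
  - rewrite Nat.add_succ_r, cos_partial_S.
    eapply Rle_trans. apply (opnorm_meq n _ (madd (msub (cos_partial n X (L + j)) (cos_partial n X L)) (cos_term n X (S (L + j))))); auto.
    red; intros; unfold msub, madd, Csub; ring.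
    eapply Rle_trans. apply opnorm_madd; auto. apply Rplus_le_compat. auto.
    replace (L + 1 + j)%nat with (S (L + j)) by lia. apply opnorm_cos_term; auto.
Qed.

Lemma cos_majorant_ratio : forall B m, 0 <= B -> B * B <= INR m -> cos_majorant B (S m) <= cos_majorant B m / 2.
Proof.
  intros.
  assert (HF : 0 < INR (fact (2 * m))) by apply lt_0_INR, lt_O_fact.
  assert (H2 : 0 <= INR m) by apply pos_INR.
  assert (Heq : cos_majorant B (S m) = cos_majorant B m * (B * B / ((2 * INR m + 1) * (2 * INR m + 2)))).
  { unfold cos_majorant. replace (2 * S m)%nat with (S (S (2 * m))) by lia.
    rewrite !fact_simpl, !mult_INR. rewrite !S_INR, mult_INR. simpl pow. simpl INR.
    field. replace (m + (m + 0))%nat with (2 * m)%nat by lia. repeat split; lra. }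
  rewrite Heq. pose proof (cos_majorant_ge0 B m H).
  assert (B * B / ((2 * INR m + 1) * (2 * INR m + 2)) <= / 2).
  { apply (Rmult_le_reg_r ((2 * INR m + 1) * (2 * INR m + 2))). nra.
    unfold Rdiv. rewrite Rmult_assoc, Rinv_l by nra. nra. }
  unfold Rdiv at 2. apply Rmult_le_compat_l; auto.
Qed.

Lemma cos_majorant_geom : forall B s j, 0 <= B -> B * B <= INR s ->
  Rsum j (fun i => cos_majorant B (s + i)) <= 2 * cos_majorant B s - 2 * cos_majorant B (s + j).
Proof.
  induction j; simpl; intros. rewrite Nat.add_0_r; lra.
  specialize (IHj H H0).
  assert (cos_majorant B (S (s + j)) <= cos_majorant B (s + j) / 2).
  { apply cos_majorant_ratio; auto. rewrite plus_INR. pose proof (pos_INR j). lra. }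
  rewrite Nat.add_succ_r. lra.
Qed.

Lemma cos_majorant_tail : forall B d, 0 <= B -> 0 < d -> exists L : nat,
  forall j, Rsum j (fun i => cos_majorant B (L + 1 + i)) <= d.
Proof.
  intros. destruct (cv_speed_pow_fact B (d / 2)) as [K HK]. lra.
  destruct (INR_unbounded (B * B)) as [s Hs].
  exists (Nat.max K s). intros.
  set (L := Nat.max K s).
  pose proof (cos_majorant_geom B (L + 1) j H). 
  assert (B * B <= INR (L + 1)). { rewrite plus_INR. pose proof (le_INR s L ltac:(lia)). simpl. lra. }
  specialize (H1 H2).
  assert (cos_majorant B (L + 1) < d / 2).
  { specialize (HK (2 * (L + 1))%nat ltac:(lia)). unfold R_dist in HK. rewrite Rminus_0_r in HK.
    unfold cos_majorant. eapply Rle_lt_trans; [apply Rle_abs|]. auto. }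
  pose proof (cos_majorant_ge0 B (L + 1 + j) H). lra.
Qed.

Lemma Rlim_spec : forall u l, Un_cv u l -> Rlim u = l.
Proof.
  intros. unfold Rlim. destruct (excluded_middle_informative _) as [H'|H'].
  - destruct (constructive_indefinite_description _ _) as [l' Hl']. simpl. eapply UL_sequence; eauto.
  - exfalso; apply H'; eauto.
Qed.

Lemma Un_cv_const : forall c, Un_cv (fun _ => c) c.
Proof. intros c e He. exists 0%nat. intros. unfold R_dist. rewrite Rminus_diag, Rabs_R0; auto. Qed.

Lemma Un_cv_Rsum : forall n (g : nat -> nat -> R) (l : nat -> R),
  (forall i, (i < n)%nat -> Un_cv (fun N => g N i) (l i)) ->
  Un_cv (fun N => Rsum n (g N)) (Rsum n l).
Proof.
  induction n; simpl; intros. apply Un_cv_const.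
  apply CV_plus. apply IHn; auto. apply H; lia.
Qed.

Definition mx_cvg (n : nat) (Y : nat -> mat) (Yl : mat) : Prop :=
  forall i j, (i < n)%nat -> (j < n)%nat ->
    Un_cv (fun N => re (Y N i j)) (re (Yl i j)) /\ Un_cv (fun N => im (Y N i j)) (im (Yl i j)).

Lemma opnorm_limit : forall n Y Yl tau N0, (0 < n)%nat -> mx_cvg n Y Yl ->
  (forall N, (N >= N0)%nat -> opnorm n (Y N) <= tau) -> opnorm n Yl <= tau.
Proof.
  intros n Y Yl tau N0 Hn Hcv Hb.
  assert (Ht : 0 <= tau) by (eapply Rle_trans; [apply (opnorm_ge0 n (Y N0) Hn)|apply Hb; lia]).
  apply opnorm_le; auto. intros v. apply vnorm_le_sq; auto.
  assert (Hc : forall i, (i < n)%nat ->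
     Un_cv (fun N => re (mapply n (Y N) v i)) (re (mapply n Yl v i)) /\
     Un_cv (fun N => im (mapply n (Y N) v i)) (im (mapply n Yl v i))).
  { intros. unfold mapply. rewrite !re_Csum, !im_Csum. split.
    - apply (Un_cv_ext (fun N => Rsum n (fun k => re (Cmul (Y N i k) (v k))))).
      intros; symmetry; apply re_Csum.
      apply (Un_cv_Rsum n (fun N k => re (Cmul (Y N i k) (v k))) (fun k => re (Cmul (Yl i k) (v k)))). intros. simpl.
      destruct (Hcv i i0 H H0). apply CV_minus; apply CV_mult; auto; apply Un_cv_const.
    - apply (Un_cv_ext (fun N => Rsum n (fun k => im (Cmul (Y N i k) (v k))))).
      intros; symmetry; apply im_Csum.
      apply (Un_cv_Rsum n (fun N k => im (Cmul (Y N i k) (v k))) (fun k => im (Cmul (Yl i k) (v k)))). intros. simpl.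
      destruct (Hcv i i0 H H0). apply CV_plus; apply CV_mult; auto; apply Un_cv_const. }
  assert (Hs : Un_cv (fun N => vsq n (mapply n (Y N) v)) (vsq n (mapply n Yl v))).
  { unfold vsq. apply (Un_cv_Rsum n (fun N i => Cmod (mapply n (Y N) v i) * Cmod (mapply n (Y N) v i)) (fun i => Cmod (mapply n Yl v i) * Cmod (mapply n Yl v i))).
    intros. destruct (Hc i H). eapply Un_cv_ext. intros; symmetry; apply Cmod_sq_mul.
    rewrite Cmod_sq_mul. apply CV_plus; apply CV_mult; auto. }
  apply (CV_shift' _ N0) in Hs.
  apply (Rle_cv_lim (Un := fun N => vsq n (mapply n (Y (N + N0)%nat) v)) (Vn := fun _ => tau * tau * vsq n v)); auto.
  2: apply Un_cv_const.
  intros N. simpl. pose proof (opnorm_bound n (Y (N + N0)%nat) v Hn).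
  pose proof (Hb (N + N0)%nat ltac:(lia)). rewrite <- !vnorm_sq.
  pose proof (vnorm_ge0 n (mapply n (Y (N + N0)%nat) v)). pose proof (vnorm_ge0 n v).
  pose proof (opnorm_ge0 n (Y (N + N0)%nat) Hn).
  assert (vnorm n (mapply n (Y (N + N0)%nat) v) <= tau * vnorm n v) by nra. nra.
Qed.

Lemma msub_through : forall n A B C, meq n (msub A B) (msub (msub A C) (msub B C)).
Proof. red; intros; unfold msub, Csub; ring. Qed.

Lemma opnorm_cos_partial_tail : forall B d, 0 <= B -> 0 < d -> exists L : nat,
  forall n X N, (0 < n)%nat -> opnorm n X <= B -> (N >= L)%nat ->
    opnorm n (msub (cos_partial n X N) (cos_partial n X L)) <= d.
Proof.
  intros B d HB Hd. destruct (cos_majorant_tail B d HB Hd) as [L HL].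
  exists L. intros n X N Hn HX HN. replace N with (L + (N - L))%nat at 1 by lia.
  eapply Rle_trans; [apply (opnorm_cos_partial_sub n X B); auto|apply HL].
Qed.

Lemma cos_partial_cvg : forall n X, (0 < n)%nat -> mx_cvg n (cos_partial n X) (mcos n X).
Proof.
  intros n X Hn i j Hi Hj. pose proof (opnorm_ge0 n X Hn) as HB.
  assert (Hcau : forall e, e > 0 -> exists L, forall N M, (N >= L)%nat -> (M >= L)%nat ->
            Cmod (Csub (cos_partial n X N i j) (cos_partial n X M i j)) < e).
  { intros e He. destruct (opnorm_cos_partial_tail (opnorm n X) (e / 3) HB) as [L HL]; [lra|].
    exists L. intros N M HN HM.
    change (Csub (cos_partial n X N i j) (cos_partial n X M i j))
      with (msub (cos_partial n X N) (cos_partial n X M) i j).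
    pose proof (opnorm_entry n (msub (cos_partial n X N) (cos_partial n X M)) i j Hi Hj).
    pose proof (opnorm_meq n _ _ Hn (msub_through n (cos_partial n X N) (cos_partial n X M) (cos_partial n X L))).
    pose proof (opnorm_msub n (msub (cos_partial n X N) (cos_partial n X L))
                  (msub (cos_partial n X M) (cos_partial n X L)) Hn).
    pose proof (HL n X N Hn (Rle_refl _) HN). pose proof (HL n X M Hn (Rle_refl _) HM). lra. }
  split.
  - destruct (R_complete (fun N => re (cos_partial n X N i j))) as [l Hl].
    { intros e He. destruct (Hcau e He) as [L HL]. exists L. intros N M HN HM. unfold R_dist.
      eapply Rle_lt_trans; [|apply (HL N M HN HM)]. eapply Rle_trans; [|apply Cmod_re].
      simpl. right; f_equal; ring. }
    unfold mcos. simpl. rewrite (Rlim_spec _ l Hl). auto.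
  - destruct (R_complete (fun N => im (cos_partial n X N i j))) as [l Hl].
    { intros e He. destruct (Hcau e He) as [L HL]. exists L. intros N M HN HM. unfold R_dist.
      eapply Rle_lt_trans; [|apply (HL N M HN HM)]. eapply Rle_trans; [|apply Cmod_im].
      simpl. right; f_equal; ring. }
    unfold mcos. simpl. rewrite (Rlim_spec _ l Hl). auto.
Qed.

Lemma mcos_approx : forall B d, 0 <= B -> 0 < d -> exists L : nat,
  forall n X, (0 < n)%nat -> opnorm n X <= B ->
    opnorm n (msub (mcos n X) (cos_partial n X L)) <= d.
Proof.
  intros B d HB Hd. destruct (opnorm_cos_partial_tail B d HB Hd) as [L HL].
  exists L. intros n X Hn HX.
  apply (opnorm_limit n (fun N => msub (cos_partial n X N) (cos_partial n X L)) _ d L Hn).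
  - intros i j Hi Hj. destruct (cos_partial_cvg n X Hn i j Hi Hj). unfold msub, Csub. simpl.
    split; apply CV_plus; auto; apply Un_cv_const.
  - intros. apply HL; auto.
Qed.

Lemma msub_mmul_split : forall n X Y Xk Yk,
  meq n (msub (mmul n X Xk) (mmul n Y Yk)) (madd (mmul n X (msub Xk Yk)) (mmul n (msub X Y) Yk)).
Proof.
  unfold meq, msub, mmul, madd; intros. rewrite <- Csum_sub, <- Csum_add. apply Csum_ext; intros.
  unfold Csub; ring.
Qed.

Lemma mpow_sub_split : forall n X Y r e B, (0 < n)%nat -> 1 <= B ->
  opnorm n X <= B -> opnorm n Y <= B -> rank_norm_split n (msub X Y) r e ->
  forall k, rank_norm_split n (msub (mpow n X k) (mpow n Y k)) (k * r) (INR k * B ^ k * e).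
Proof.
  intros n X Y r e B Hn HB HX HY HD. pose proof (rank_norm_split_ge0 n _ r e Hn HD) as He.
  induction k.
  - apply (rank_norm_split_meq n _ mzero).
    + intros i j _ _. unfold msub, mzero, Csub. cbn [mpow]. cx.
    + apply rank_norm_split_of_opnorm. eapply Rle_trans. apply opnorm_mzero; auto. simpl; lra.
  - apply (rank_norm_split_mono n _ (k * r + r) _ (opnorm n X * (INR k * B ^ k * e) + e * opnorm n (mpow n Y k))).
    + lia.
    + pose proof (opnorm_ge0 n X Hn). pose proof (opnorm_ge0 n Y Hn). pose proof (pos_INR k).
      assert (HYk : opnorm n (mpow n Y k) <= B ^ k).
      { eapply Rle_trans. apply opnorm_mpow; auto. apply pow_incr; lra. }
      assert (HBk : 1 <= B ^ k) by (apply pow_R1_Rle; lra).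
      assert (0 <= INR k * B ^ k * e) by (apply Rmult_le_pos; [apply Rmult_le_pos|]; lra).
      assert (opnorm n X * (INR k * B ^ k * e) <= B * (INR k * B ^ k * e)) by (apply Rmult_le_compat_r; auto).
      assert (e * opnorm n (mpow n Y k) <= e * (B * B ^ k)) by (apply Rmult_le_compat_l; nra).
      rewrite S_INR. simpl pow. nra.
    + cbn [mpow]. eapply rank_norm_split_meq. apply msub_mmul_split.
      apply rank_norm_split_madd; auto.
      * apply rank_norm_split_mmul_l; auto.
      * apply rank_norm_split_mmul_r; auto.
Qed.

Definition cos_rank_factor (L : nat) : nat := ((L + 1) * (2 * L))%nat.

Lemma cos_coef_le1 : forall m, Rabs ((-1) ^ m / INR (fact (2 * m))) <= 1.
Proof.
  intros. unfold Rdiv. rewrite Rabs_mult, pow_1_abs, Rmult_1_l.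
  pose proof (lt_O_fact (2 * m)). assert (1 <= INR (fact (2*m))) by (apply (le_INR 1); lia).
  rewrite Rabs_right. rewrite <- Rinv_1. apply Rinv_le_contravar; lra.
  apply Rle_ge, Rlt_le, Rinv_0_lt_compat; lra.
Qed.

Section CosSplit.
Variables (n : nat) (X Y : mat) (r : nat) (e B : R).
Hypothesis Hn : (0 < n)%nat.
Hypothesis HB : 1 <= B.
Hypothesis HX : opnorm n X <= B.
Hypothesis HY : opnorm n Y <= B.
Hypothesis HD : rank_norm_split n (msub X Y) r e.

Lemma cos_term_sub_split : forall m,
  rank_norm_split n (msub (cos_term n X m) (cos_term n Y m)) (2 * m * r) (INR (2 * m) * B ^ (2 * m) * e).
Proof.
  intros m. pose proof (rank_norm_split_ge0 n _ r e Hn HD) as He.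
  set (c := (-1) ^ m / INR (fact (2 * m))).
  apply (rank_norm_split_mono n _ (2 * m * r) _ (Rabs c * (INR (2 * m) * B ^ (2 * m) * e))); [lia| |].
  - pose proof (cos_coef_le1 m). fold c in H.
    assert (0 <= INR (2 * m) * B ^ (2 * m) * e)
      by (apply Rmult_le_pos; [apply Rmult_le_pos; [apply pos_INR|apply pow_le; lra]|lra]).
    pose proof (Rabs_pos c). nra.
  - apply (rank_norm_split_meq n _ (mscal c (msub (mpow n X (2 * m)) (mpow n Y (2 * m))))).
    + intros i j _ _. unfold cos_term, msub, mscal, Csub. fold c. rewrite !Cscal_mul. ring.
    + apply rank_norm_split_mscal; auto. apply mpow_sub_split; auto.
Qed.

Lemma cos_partial_sub_split : forall L,
  rank_norm_split n (msub (cos_partial n X L) (cos_partial n Y L))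
    (cos_rank_factor L * r) (INR (cos_rank_factor L) * B ^ (2 * L) * e).
Proof.
  pose proof (rank_norm_split_ge0 n _ r e Hn HD) as He.
  induction L.
  - exact (cos_term_sub_split 0).
  - rewrite !cos_partial_S.
    apply (rank_norm_split_mono n _ (cos_rank_factor L * r + 2 * S L * r) _
             (INR (cos_rank_factor L) * B ^ (2 * L) * e + INR (2 * S L) * B ^ (2 * S L) * e)).
    + unfold cos_rank_factor. nia.
    + assert (B ^ (2 * L) <= B ^ (2 * S L)) by (apply Rle_pow; [lra|lia]).
      assert (INR (cos_rank_factor L) + INR (2 * S L) <= INR (cos_rank_factor (S L)))
        by (rewrite <- plus_INR; apply le_INR; unfold cos_rank_factor; nia).
      assert (0 <= B ^ (2 * L)) by (apply pow_le; lra).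
      pose proof (pos_INR (cos_rank_factor L)). pose proof (pos_INR (2 * S L)).
      assert (INR (cos_rank_factor L) * B ^ (2 * L) * e <= INR (cos_rank_factor L) * B ^ (2 * S L) * e)
        by (apply Rmult_le_compat_r; auto; apply Rmult_le_compat_l; auto).
      assert ((INR (cos_rank_factor L) + INR (2 * S L)) * B ^ (2 * S L) * e
              <= INR (cos_rank_factor (S L)) * B ^ (2 * S L) * e)
        by (apply Rmult_le_compat_r; auto; apply Rmult_le_compat_r; auto; lra).
      nra.
    + eapply rank_norm_split_meq; [|apply rank_norm_split_madd; [auto|apply IHL|apply cos_term_sub_split]].
      intros i j _ _. unfold msub, madd, Csub. ring.
Qed.
End CosSplit.

Lemma ex_RInt_continuity : forall f a b, continuity f -> ex_RInt f a b.
Proof.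
  intros. apply (ex_RInt_continuous (V := R_CompleteNormedModule)). intros. apply continuity_pt_filterlim. apply H.
Qed.
Definition RI (g : R -> R) : R := RInt g (- PI) PI.

Lemma Rint_RI : forall g, continuity g -> Rint g (- PI) PI = RI g.
Proof.
  intros. unfold Rint, RI. destruct (excluded_middle_informative _) as [H'|H'].
  - destruct (constructive_indefinite_description _ _) as [v [pr Hv]]. simpl. rewrite <- Hv.
    symmetry; apply RInt_Reals.
  - exfalso. apply H'. exists (RiemannInt (ex_RInt_Reals_0 g _ _ (ex_RInt_continuity g (- PI) PI H))).
    eexists; reflexivity.
Qed.

Lemma RI_plus : forall f g, continuity f -> continuity g -> RI (fun x => f x + g x) = RI f + RI g.
Proof. intros. unfold RI. apply (RInt_plus f g); apply ex_RInt_continuity; auto. Qed.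
Lemma RI_minus : forall f g, continuity f -> continuity g -> RI (fun x => f x - g x) = RI f - RI g.
Proof. intros. unfold RI. apply (RInt_minus f g); apply ex_RInt_continuity; auto. Qed.
Lemma RI_scal : forall c f, continuity f -> RI (fun x => c * f x) = c * RI f.
Proof. intros. unfold RI. apply (RInt_scal f); apply ex_RInt_continuity; auto. Qed.
Lemma RI_const : forall c, RI (fun _ => c) = 2 * PI * c.
Proof. intros. unfold RI. rewrite RInt_const. simpl. unfold scal; simpl. unfold mult; simpl. ring. Qed.
Lemma RI_le : forall f g, continuity f -> continuity g -> (forall x, - PI <= x <= PI -> f x <= g x) -> RI f <= RI g.
Proof.
  intros. unfold RI. apply RInt_le; try apply ex_RInt_continuity; auto. pose proof PI_RGT_0; lra.
  intros; apply H1; lra.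
Qed.
Lemma RI_ext : forall f g, (forall x, - PI <= x <= PI -> f x = g x) -> RI f = RI g.
Proof.
  intros. unfold RI. apply RInt_ext. intros. apply H. pose proof PI_RGT_0.
  rewrite Rmin_left in H0 by lra. rewrite Rmax_right in H0 by lra. lra.
Qed.

Definition Ccont (h : R -> Cx) : Prop := continuity (fun t => re (h t)) /\ continuity (fun t => im (h t)).

Lemma cont_plus : forall f g : R -> R, continuity f -> continuity g -> continuity (fun x => f x + g x).
Proof. intros. apply (continuity_plus f g); auto. Qed.
Lemma cont_mult : forall f g : R -> R, continuity f -> continuity g -> continuity (fun x => f x * g x).
Proof. intros. apply (continuity_mult f g); auto. Qed.
Lemma cont_opp : forall f : R -> R, continuity f -> continuity (fun x => - f x).
Proof. intros. apply (continuity_opp f); auto. Qed.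
Lemma cont_minus : forall f g : R -> R, continuity f -> continuity g -> continuity (fun x => f x - g x).
Proof. intros. apply (continuity_minus f g); auto. Qed.
Lemma cont_const : forall c : R, continuity (fun _ => c).
Proof. intros. apply continuity_const. intros x y; auto. Qed.
Lemma cont_id : continuity (fun x => x).
Proof. apply derivable_continuous, derivable_id. Qed.
Lemma cont_comp : forall f g : R -> R, continuity f -> continuity g -> continuity (fun x => g (f x)).
Proof. intros. apply (continuity_comp f g); auto. Qed.
Lemma cont_sqrt_comp : forall f : R -> R, continuity f -> (forall x, 0 <= f x) -> continuity (fun x => sqrt (f x)).
Proof. intros. intro x. apply (continuity_pt_comp f sqrt); auto. apply continuity_pt_sqrt; auto. Qed.

Lemma Ccont_const : forall c, Ccont (fun _ => c).
Proof. split; apply cont_const. Qed.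
Lemma Ccont_add : forall f g, Ccont f -> Ccont g -> Ccont (fun t => Cadd (f t) (g t)).
Proof. intros f g [] []; split; simpl; apply cont_plus; auto. Qed.
Lemma Ccont_mul : forall f g, Ccont f -> Ccont g -> Ccont (fun t => Cmul (f t) (g t)).
Proof.
  intros f g [] []; split; simpl.
  apply cont_minus; apply cont_mult; auto. apply cont_plus; apply cont_mult; auto.
Qed.
Lemma Ccont_conj : forall f, Ccont f -> Ccont (fun t => Cconj (f t)).
Proof. intros f []; split; simpl; auto. apply cont_opp; auto. Qed.
Lemma Ccont_sub : forall f g, Ccont f -> Ccont g -> Ccont (fun t => Csub (f t) (g t)).
Proof. intros f g [] []; split; simpl; apply cont_plus; auto; apply cont_opp; auto. Qed.
Lemma Ccont_scal : forall r f, Ccont f -> Ccont (fun t => Cscal r (f t)).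
Proof. intros r f []; split; simpl; apply cont_mult; auto; apply cont_const. Qed.
Lemma Ccont_Csum : forall m (h : nat -> R -> Cx), (forall i, (i < m)%nat -> Ccont (h i)) ->
  Ccont (fun t => Csum m (fun i => h i t)).
Proof.
  induction m; simpl; intros. apply Ccont_const.
  apply (Ccont_add (fun t => Csum m (fun i => h i t)) (h m)); auto.
Qed.
Lemma Ccont_expi : forall a b, Ccont (fun t => Cexpi (a * t + b)).
Proof.
  intros; split; simpl.
  - apply (cont_comp (fun t => a * t + b) cos). apply cont_plus; [apply cont_mult; [apply cont_const|apply cont_id]|apply cont_const]. apply continuity_cos.
  - apply (cont_comp (fun t => a * t + b) sin). apply cont_plus; [apply cont_mult; [apply cont_const|apply cont_id]|apply cont_const]. apply continuity_sin.
Qed.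
Lemma Ccont_mod : forall f, Ccont f -> continuity (fun t => Cmod (f t)).
Proof.
  intros f []. unfold Cmod. apply (cont_sqrt_comp (fun t => re (f t) ^ 2 + im (f t) ^ 2)).
  simpl. apply cont_plus; apply cont_mult; auto; apply cont_mult; auto; apply cont_const.
  intros. nra.
Qed.
Lemma Ccont_ext : forall f g, (forall t, f t = g t) -> Ccont f -> Ccont g.
Proof. intros. replace g with f; auto. apply functional_extensionality; auto. Qed.

Definition CI (h : R -> Cx) : Cx := mkC (RI (fun t => re (h t))) (RI (fun t => im (h t))).

Lemma CI_add : forall f g, Ccont f -> Ccont g -> CI (fun t => Cadd (f t) (g t)) = Cadd (CI f) (CI g).
Proof. intros f g [] []. unfold CI; simpl. rewrite !RI_plus; auto. Qed.
Lemma CI_sub : forall f g, Ccont f -> Ccont g -> CI (fun t => Csub (f t) (g t)) = Csub (CI f) (CI g).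
Proof.
  intros f g [] []. unfold CI; simpl. apply Cext; simpl.
  transitivity (RI (fun t => re (f t) - re (g t))). apply RI_ext; intros; ring. rewrite RI_minus; auto; ring.
  transitivity (RI (fun t => im (f t) - im (g t))). apply RI_ext; intros; ring. rewrite RI_minus; auto; ring.
Qed.
Lemma CI_cmul : forall c f, Ccont f -> CI (fun t => Cmul c (f t)) = Cmul c (CI f).
Proof.
  intros c f []. unfold CI; simpl. apply Cext; simpl.
  rewrite <- !RI_scal, <- RI_minus; auto; try (apply cont_mult; auto; apply cont_const).
  rewrite <- !RI_scal, <- RI_plus; auto; try (apply cont_mult; auto; apply cont_const).
Qed.
Lemma CI_scal : forall r f, Ccont f -> CI (fun t => Cscal r (f t)) = Cscal r (CI f).
Proof.
  intros. rewrite Cscal_mul, <- CI_cmul; auto. f_equal. apply functional_extensionality; intros; apply Cscal_mul.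
Qed.
Lemma CI_Csum : forall m (h : nat -> R -> Cx), (forall i, (i < m)%nat -> Ccont (h i)) ->
  CI (fun t => Csum m (fun i => h i t)) = Csum m (fun i => CI (h i)).
Proof.
  induction m; simpl; intros.
  - unfold CI; simpl. rewrite !RI_const. cx.
  - rewrite (CI_add (fun t => Csum m (fun i => h i t)) (h m)); auto. rewrite IHm; auto.
    apply Ccont_Csum; auto.
Qed.
Lemma CI_ext : forall f g, (forall t, - PI <= t <= PI -> f t = g t) -> CI f = CI g.
Proof. intros. unfold CI. f_equal; apply RI_ext; intros; rewrite H; auto. Qed.
Lemma RI_ge0 : forall f, continuity f -> (forall x, - PI <= x <= PI -> 0 <= f x) -> 0 <= RI f.
Proof.
  intros. replace 0 with (RI (fun _ => 0)). apply RI_le; auto. apply cont_const.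
  rewrite RI_const; ring.
Qed.
Lemma CI_mod : forall f, Ccont f -> Cmod (CI f) <= RI (fun t => Cmod (f t)).
Proof.
  intros f Hf. set (z := CI f).
  assert (H1 : Cmul (Cconj z) z = CI (fun t => Cmul (Cconj z) (f t))) by (rewrite CI_cmul; auto).
  rewrite Cmul_conj_self in H1.
  assert (H2 : Cmod z * Cmod z <= Cmod z * RI (fun t => Cmod (f t))).
  { assert (Cmod z * Cmod z = RI (fun t => re (Cmul (Cconj z) (f t)))).
    { change (Cmod z * Cmod z) with (re (mkC (Cmod z * Cmod z) 0)). rewrite H1. reflexivity. }
    rewrite H. rewrite <- RI_scal by (apply Ccont_mod; auto).
    apply RI_le. apply (Ccont_mul (fun _ => Cconj z) f); auto; apply Ccont_const.
    apply cont_mult; [apply cont_const|apply Ccont_mod; auto].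
    intros. eapply Rle_trans. apply Rle_abs. eapply Rle_trans. apply Cmod_re.
    rewrite Cmod_mul, Cmod_conj. lra. }
  pose proof (Cmod_ge0 z). pose proof (RI_ge0 (fun t => Cmod (f t)) (Ccont_mod f Hf) (fun x _ => Cmod_ge0 (f x))).
  destruct (Req_dec (Cmod z) 0). lra.
  apply (Rmult_le_reg_l (Cmod z)); lra.
Qed.

Lemma Cexpi_add : forall a b, Cmul (Cexpi a) (Cexpi b) = Cexpi (a + b).
Proof. intros. apply Cext; simpl. rewrite cos_plus; ring. rewrite sin_plus; ring. Qed.
Lemma Cexpi_conj : forall a, Cconj (Cexpi a) = Cexpi (- a).
Proof. intros. apply Cext; simpl. rewrite cos_neg; auto. rewrite sin_neg; auto. Qed.
Lemma Cmod_expi : forall a, Cmod (Cexpi a) = 1.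
Proof. intros. unfold Cmod; simpl. pose proof (sin2_cos2 a). unfold Rsqr in H. replace (cos a * (cos a * 1) + sin a * (sin a * 1)) with 1. apply sqrt_1. nra. Qed.
Lemma Cexpi_0 : Cexpi 0 = C1.
Proof. apply Cext; simpl. apply cos_0. apply sin_0. Qed.

Lemma RI_cos_int : forall k : Z, k <> 0%Z -> RI (fun t => cos (IZR k * t)) = 0.
Proof.
  intros. unfold RI. assert (Hk : IZR k <> 0) by (apply not_0_IZR; auto).
  rewrite (is_RInt_unique _ _ _ (minus (sin (IZR k * PI) / IZR k) (sin (IZR k * - PI) / IZR k))).
  rewrite !sin_eq_0_1. unfold minus, plus, opp; simpl. field; auto.
  exists (- k)%Z. rewrite opp_IZR. ring. exists k; auto.
  apply (is_RInt_derive (fun t => sin (IZR k * t) / IZR k)).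
  intros. auto_derive; auto. field; auto.
  intros. apply continuity_pt_filterlim. apply (cont_comp (fun t => IZR k * t) cos).
  apply cont_mult; [apply cont_const|apply cont_id]. apply continuity_cos.
Qed.
Lemma RI_sin_int : forall k : Z, RI (fun t => sin (IZR k * t)) = 0.
Proof.
  intros. destruct (Z.eq_dec k 0). subst. rewrite (RI_ext _ (fun _ => 0)). rewrite RI_const; ring.
  intros. rewrite Rmult_0_l, sin_0; auto.
  unfold RI. assert (Hk : IZR k <> 0) by (apply not_0_IZR; auto).
  rewrite (is_RInt_unique _ _ _ (minus (- cos (IZR k * PI) / IZR k) (- cos (IZR k * - PI) / IZR k))).
  replace (IZR k * - PI) with (- (IZR k * PI)) by ring. rewrite cos_neg.
  unfold minus, plus, opp; simpl. field; auto.
  apply (is_RInt_derive (fun t => - cos (IZR k * t) / IZR k)).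
  intros. auto_derive; auto. field; auto.
  intros. apply continuity_pt_filterlim. apply (cont_comp (fun t => IZR k * t) sin).
  apply cont_mult; [apply cont_const|apply cont_id]. apply continuity_sin.
Qed.
Lemma CI_expi : forall k : Z, CI (fun t => Cexpi (IZR k * t)) = if Z.eqb k 0 then mkC (2 * PI) 0 else C0.
Proof.
  intros. unfold CI; simpl. destruct (Z.eqb_spec k 0).
  - subst. rewrite (RI_ext _ (fun _ => 1)), (RI_ext (fun t => sin (0 * t)) (fun _ => 0)), !RI_const.
    apply Cext; simpl; ring.
    intros. rewrite Rmult_0_l, sin_0; auto. intros. rewrite Rmult_0_l, cos_0; auto.
  - rewrite RI_cos_int, RI_sin_int; auto.
Qed.

Lemma Ccont_expi_lin : forall a, Ccont (fun t => Cexpi (a * t)).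
Proof. intros. apply (Ccont_ext (fun t => Cexpi (a * t + 0))). intros; rewrite Rplus_0_r; auto. apply Ccont_expi. Qed.
Lemma Ccont_expi_neg : forall a, Ccont (fun t => Cexpi (- (a * t))).
Proof. intros. apply (Ccont_ext (fun t => Cexpi ((- a) * t + 0))). intros; f_equal; ring. apply Ccont_expi. Qed.

Lemma fourier_CI : forall g k, Ccont g ->
  fourier g k = Cscal (/ (2 * PI)) (CI (fun t => Cmul (g t) (Cexpi (- (IZR k * t))))).
Proof.
  intros. assert (Hc : Ccont (fun t => Cmul (g t) (Cexpi (- (IZR k * t))))).
  { apply Ccont_mul; auto. apply Ccont_expi_neg. }
  destruct Hc as [H1 H2]. unfold fourier, CI. simpl.
  rewrite !Rint_RI; auto.
Qed.

Lemma fourier_sub : forall g1 g2 k, Ccont g1 -> Ccont g2 ->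
  fourier (fun t => Csub (g1 t) (g2 t)) k = Csub (fourier g1 k) (fourier g2 k).
Proof.
  intros. rewrite !fourier_CI; auto. 2: apply Ccont_sub; auto.
  rewrite (CI_ext _ (fun t => Csub (Cmul (g1 t) (Cexpi (- (IZR k * t)))) (Cmul (g2 t) (Cexpi (- (IZR k * t)))))).
  rewrite CI_sub. apply Cext; simpl; ring.
  apply Ccont_mul; auto; apply Ccont_expi_neg. apply Ccont_mul; auto; apply Ccont_expi_neg.
  intros; unfold Csub; ring.
Qed.

Lemma fourier_expi : forall m k, fourier (fun t => Cexpi (IZR m * t)) k = if Z.eqb m k then C1 else C0.
Proof.
  intros. rewrite fourier_CI by apply Ccont_expi_lin.
  rewrite (CI_ext _ (fun t => Cexpi (IZR (m - k) * t))).
  rewrite CI_expi. destruct (Z.eqb_spec (m - k) 0); destruct (Z.eqb_spec m k); try lia.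
  apply Cext; simpl; field; pose proof PI_RGT_0; lra. apply Cext; simpl; ring.
  intros. rewrite Cexpi_add, minus_IZR. f_equal; ring.
Qed.

Lemma fourier_one : forall k, fourier (fun _ => C1) k = if Z.eqb k 0 then C1 else C0.
Proof.
  intros. transitivity (fourier (fun t => Cexpi (IZR 0 * t)) k).
  f_equal. apply functional_extensionality; intros. rewrite Rmult_0_l, Cexpi_0; auto.
  rewrite fourier_expi. destruct (Z.eqb_spec k 0); destruct (Z.eqb_spec 0 k); auto; lia.
Qed.

Definition trig_poly (n : nat) (v : vec) (t : R) : Cx := Csum n (fun j => Cmul (v j) (Cexpi (INR j * t))).
Lemma Ccont_trig_poly : forall n v, Ccont (trig_poly n v).
Proof.
  intros. unfold trig_poly. apply (Ccont_Csum n (fun j t => Cmul (v j) (Cexpi (INR j * t)))).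
  intros. apply Ccont_mul. apply Ccont_const. apply Ccont_expi_lin.
Qed.

Lemma IZR_nat_sub : forall j k : nat, IZR (Z.of_nat j - Z.of_nat k) = INR j - INR k.
Proof. intros. rewrite minus_IZR, <- !INR_IZR_INZ. auto. Qed.

Lemma trig_poly_conj_mul : forall n v w t, Cmul (Cconj (trig_poly n v t)) (trig_poly n w t) =
  Csum n (fun j => Csum n (fun k => Cmul (Cmul (Cconj (v j)) (w k)) (Cexpi (- (IZR (Z.of_nat j - Z.of_nat k) * t))))).
Proof.
  intros. unfold trig_poly. rewrite Cconj_Csum, <- Csum_mul_r. apply Csum_ext; intros j Hj.
  rewrite <- Csum_mul_l. apply Csum_ext; intros k Hk.
  rewrite Cconj_mul, Cexpi_conj, IZR_nat_sub.
  replace (Cexpi (- ((INR j - INR k) * t))) with (Cmul (Cexpi (- (INR j * t))) (Cexpi (INR k * t))).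
  ring. rewrite Cexpi_add. f_equal; ring.
Qed.

Lemma cip_toeplitz : forall n g v w, Ccont g ->
  cip n v (mapply n (toeplitz g n) w) =
  Cscal (/ (2 * PI)) (CI (fun t => Cmul (g t) (Cmul (Cconj (trig_poly n v t)) (trig_poly n w t)))).
Proof.
  intros. rewrite (CI_ext _ (fun t => Csum n (fun j => Csum n (fun k =>
     Cmul (Cmul (Cconj (v j)) (w k)) (Cmul (g t) (Cexpi (- (IZR (Z.of_nat j - Z.of_nat k) * t)))))))).
  2: { intros. rewrite trig_poly_conj_mul. rewrite <- Csum_mul_l. apply Csum_ext; intros. rewrite <- Csum_mul_l.
       apply Csum_ext; intros. ring. }
  rewrite (CI_Csum n (fun j t => Csum n (fun k =>
     Cmul (Cmul (Cconj (v j)) (w k)) (Cmul (g t) (Cexpi (- (IZR (Z.of_nat j - Z.of_nat k) * t))))))).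
  2: { intros. apply (Ccont_Csum n (fun k t => Cmul (Cmul (Cconj (v i)) (w k)) (Cmul (g t) (Cexpi (- (IZR (Z.of_nat i - Z.of_nat k) * t)))))).
       intros. apply Ccont_mul. apply Ccont_const. apply Ccont_mul; auto. apply Ccont_expi_neg. }
  rewrite <- Csum_scal. unfold cip, mapply. apply Csum_ext; intros j Hj.
  rewrite (CI_Csum n (fun k t => Cmul (Cmul (Cconj (v j)) (w k)) (Cmul (g t) (Cexpi (- (IZR (Z.of_nat j - Z.of_nat k) * t)))))).
  2: { intros. apply Ccont_mul. apply Ccont_const. apply Ccont_mul; auto. apply Ccont_expi_neg. }
  rewrite <- Csum_scal, <- Csum_mul_l. apply Csum_ext; intros k Hk.
  rewrite CI_cmul. 2: { apply Ccont_mul; auto. apply Ccont_expi_neg. }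
  unfold toeplitz. rewrite fourier_CI by auto. rewrite !Cscal_mul. ring.
Qed.

Lemma toeplitz_one_eq_mid : forall n, meq n (toeplitz (fun _ => C1) n) mid.
Proof.
  red; intros. unfold toeplitz, mid. rewrite fourier_one.
  destruct (Z.eqb_spec (Z.of_nat i - Z.of_nat j) 0); destruct (Nat.eqb_spec i j); auto; lia.
Qed.

Lemma parseval : forall n v, RI (fun t => Cmod (trig_poly n v t) * Cmod (trig_poly n v t)) = 2 * PI * vsq n v.
Proof.
  intros. pose proof (cip_toeplitz n (fun _ => C1) v v (Ccont_const C1)).
  assert (cip n v (mapply n (toeplitz (fun _ => C1) n) v) = cip n v v).
  { unfold cip. apply Csum_ext; intros. f_equal. rewrite (mapply_ext n _ mid v v); auto.
    2: apply toeplitz_one_eq_mid. unfold mapply, mid. rewrite (Csum_single n _ i); auto. rewrite Nat.eqb_refl; ring.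
    intros k Hk Hne. rewrite (proj2 (Nat.eqb_neq i k)) by lia. ring. }
  rewrite H0, cip_self in H. apply (f_equal re) in H. simpl in H.
  unfold CI in H; simpl in H.
  rewrite (RI_ext _ (fun t => Cmod (trig_poly n v t) * Cmod (trig_poly n v t))) in H.
  2: { intros. rewrite Cmod_sq_mul. simpl. ring. }
  rewrite H. field. pose proof PI_RGT_0; lra.
Qed.

Lemma opnorm_le_sesquilinear : forall n X c, (0 < n)%nat -> 0 <= c ->
  (forall v w, Cmod (cip n v (mapply n X w)) <= c / 2 * (vsq n v + vsq n w)) -> opnorm n X <= c.
Proof.
  intros. apply opnorm_le; auto. intros w.
  set (y := mapply n X w).
  pose proof (vnorm_ge0 n y). pose proof (vnorm_ge0 n w).
  destruct (Req_dec (vnorm n y) 0). rewrite H4; nra.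
  set (s := vnorm n w / vnorm n y).
  specialize (H1 (fun i => Cmul (mkC s 0) (y i)) w). fold y in H1.
  assert (cip n (fun i => Cmul (mkC s 0) (y i)) y = mkC (s * vsq n y) 0).
  { unfold cip. rewrite (Csum_ext _ _ (fun i => Cmul (mkC s 0) (Cmul (Cconj (y i)) (y i)))).
    rewrite Csum_mul_l. fold (cip n y y). rewrite cip_self. cx.
    intros. rewrite Cconj_mul. replace (Cconj (mkC s 0)) with (mkC s 0) by cx. ring. }
  rewrite H5, Cmod_real in H1.
  assert (vsq n (fun i => Cmul (mkC s 0) (y i)) = s * s * vsq n y).
  { assert (0 <= s) by (unfold s; apply Rmult_le_pos; auto; apply Rlt_le, Rinv_0_lt_compat; lra).
    rewrite <- !vnorm_sq. rewrite vnorm_cmul, Cmod_real. rewrite Rabs_right by lra. ring. }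
  rewrite H6 in H1. rewrite <- !vnorm_sq in H1.
  assert (s * vnorm n y = vnorm n w) by (unfold s; field; auto).
  assert (0 <= s) by (unfold s; apply Rmult_le_pos; auto; apply Rlt_le, Rinv_0_lt_compat; lra).
  rewrite Rabs_right in H1 by (apply Rle_ge; apply Rmult_le_pos; auto; apply Rmult_le_pos; auto).
  set (a := vnorm n y) in *. set (b := vnorm n w) in *.
  assert (E1 : s * (a * a) = b * a) by (rewrite <- H7; ring).
  assert (E2 : s * s * (a * a) = b * b) by (rewrite <- H7; ring).
  rewrite E1, E2 in H1.
  assert (b * a <= c * (b * b)) by lra.
  destruct (Req_dec b 0). pose proof (frobenius_bound n X w). fold y a b in H11. rewrite H10, Rmult_0_r in H11. lra.
  apply (Rmult_le_reg_l b). lra. lra.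
Qed.

Lemma opnorm_toeplitz_le : forall n g eta, (0 < n)%nat -> Ccont g -> 0 <= eta ->
  (forall t, - PI <= t <= PI -> Cmod (g t) <= eta) -> opnorm n (toeplitz g n) <= eta.
Proof.
  intros. apply opnorm_le_sesquilinear; auto. intros v w.
  rewrite cip_toeplitz by auto. rewrite Cmod_scal.
  assert (HP : 0 < 2 * PI) by (pose proof PI_RGT_0; lra).
  rewrite Rabs_right by (apply Rle_ge, Rlt_le, Rinv_0_lt_compat; auto).
  assert (Hc : Ccont (fun t => Cmul (g t) (Cmul (Cconj (trig_poly n v t)) (trig_poly n w t)))).
  { apply Ccont_mul; auto. apply Ccont_mul. apply Ccont_conj, Ccont_trig_poly. apply Ccont_trig_poly. }
  eapply Rle_trans. apply Rmult_le_compat_l. apply Rlt_le, Rinv_0_lt_compat; auto. apply CI_mod; auto.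
  assert (RI (fun t => Cmod (Cmul (g t) (Cmul (Cconj (trig_poly n v t)) (trig_poly n w t)))) <=
          RI (fun t => eta / 2 * (Cmod (trig_poly n v t) * Cmod (trig_poly n v t)) + eta / 2 * (Cmod (trig_poly n w t) * Cmod (trig_poly n w t)))).
  { apply RI_le. apply Ccont_mod; auto.
    pose proof (Ccont_mod _ (Ccont_trig_poly n v)). pose proof (Ccont_mod _ (Ccont_trig_poly n w)).
    apply cont_plus; apply cont_mult; try apply cont_const; apply cont_mult; auto.
    intros. rewrite !Cmod_mul, Cmod_conj. specialize (H2 x H3).
    pose proof (Cmod_ge0 (g x)). pose proof (Cmod_ge0 (trig_poly n v x)). pose proof (Cmod_ge0 (trig_poly n w x)).
    assert (Cmod (trig_poly n v x) * Cmod (trig_poly n w x) <= (Cmod (trig_poly n v x) * Cmod (trig_poly n v x) + Cmod (trig_poly n w x) * Cmod (trig_poly n w x)) / 2).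
    { pose proof (Rle_0_sqr (Cmod (trig_poly n v x) - Cmod (trig_poly n w x))). unfold Rsqr in H7. lra. }
    assert (Cmod (g x) * (Cmod (trig_poly n v x) * Cmod (trig_poly n w x)) <= eta * (Cmod (trig_poly n v x) * Cmod (trig_poly n w x))).
    { apply Rmult_le_compat_r; auto. apply Rmult_le_pos; auto. }
    assert (eta * (Cmod (trig_poly n v x) * Cmod (trig_poly n w x)) <= eta * ((Cmod (trig_poly n v x) * Cmod (trig_poly n v x) + Cmod (trig_poly n w x) * Cmod (trig_poly n w x)) / 2)).
    { apply Rmult_le_compat_l; auto. }
    lra. }
  rewrite RI_plus, !RI_scal, !parseval in H3.
  2,3: pose proof (Ccont_mod _ (Ccont_trig_poly n v)); pose proof (Ccont_mod _ (Ccont_trig_poly n w)); apply cont_mult; auto.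
  2,3: pose proof (Ccont_mod _ (Ccont_trig_poly n v)); pose proof (Ccont_mod _ (Ccont_trig_poly n w)); apply cont_mult; try apply cont_const; apply cont_mult; auto.
  apply (Rmult_le_compat_l (/ (2 * PI))) in H3. 2: apply Rlt_le, Rinv_0_lt_compat; auto.
  eapply Rle_trans. apply H3. right. field. pose proof PI_RGT_0; lra.
Qed.

Definition toep (n : nat) (a : Z -> Cx) : mat := fun j k => a (Z.of_nat j - Z.of_nat k)%Z.
Definition circ_coef_of (a : Z -> Cx) (n : nat) (k : nat) : Cx :=
  Cscal (/ INR n)
    (Cadd (Cscal (INR n - INR k) (a (Z.of_nat k)))
          (Cscal (INR k) (a (Z.of_nat k - Z.of_nat n)%Z))).
Definition circ (n : nat) (a : Z -> Cx) : mat :=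
  fun j k => circ_coef_of a n (Z.to_nat (Z.modulo (Z.of_nat j - Z.of_nat k) (Z.of_nat n))).
Lemma opt_circ_circ : forall f n, opt_circ f n = circ n (fourier f). Proof. reflexivity. Qed.

Definition circ_average (n : nat) (X : mat) : mat :=
  fun j k => Cscal (/ INR n) (Csum n (fun l => X ((j + l) mod n)%nat ((k + l) mod n)%nat)).

Lemma Csum_reindex_lt : forall n k F, (k < n)%nat ->
  Csum n (fun l => F ((k + l) mod n)%nat) = Csum n F.
Proof.
  intros.
  assert (E1 : Csum ((n - k) + k) (fun l => F ((k + l) mod n)%nat) =
     Cadd (Csum (n - k) (fun l => F (k + l)%nat)) (Csum k F)).
  { rewrite Csum_split. f_equal.
    apply Csum_ext; intros. rewrite Nat.mod_small by lia. auto.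
    apply Csum_ext; intros. f_equal. replace (k + (n - k + i))%nat with (i + 1 * n)%nat by lia.
    rewrite Nat.Div0.mod_add. apply Nat.mod_small; lia. }
  assert (E2 : Csum (k + (n - k)) F = Cadd (Csum k F) (Csum (n - k) (fun l => F (k + l)%nat))).
  { apply Csum_split. }
  replace (n - k + k)%nat with n in E1 by lia. replace (k + (n - k))%nat with n in E2 by lia.
  rewrite E1, E2. ring.
Qed.
Lemma Csum_reindex : forall n k F, (0 < n)%nat ->
  Csum n (fun l => F ((k + l) mod n)%nat) = Csum n F.
Proof.
  intros. rewrite <- (Csum_reindex_lt n (k mod n) F) by (apply Nat.mod_upper_bound; lia).
  apply Csum_ext; intros. f_equal. rewrite Nat.Div0.add_mod_idemp_l. auto.
Qed.
Lemma Rsum_reindex_lt : forall n k F, (k < n)%nat ->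
  Rsum n (fun l => F ((k + l) mod n)%nat) = Rsum n F.
Proof.
  intros.
  assert (E1 : Rsum ((n - k) + k) (fun l => F ((k + l) mod n)%nat) =
     Rsum (n - k) (fun l => F (k + l)%nat) + Rsum k F).
  { rewrite Rsum_split. f_equal.
    apply Rsum_ext; intros. rewrite Nat.mod_small by lia. auto.
    apply Rsum_ext; intros. f_equal. replace (k + (n - k + i))%nat with (i + 1 * n)%nat by lia.
    rewrite Nat.Div0.mod_add. apply Nat.mod_small; lia. }
  assert (E2 : Rsum (k + (n - k)) F = Rsum k F + Rsum (n - k) (fun l => F (k + l)%nat)).
  { apply Rsum_split. }
  replace (n - k + k)%nat with n in E1 by lia. replace (k + (n - k))%nat with n in E2 by lia.
  rewrite E1, E2. ring.
Qed.
Lemma Rsum_reindex : forall n k F, (0 < n)%nat ->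
  Rsum n (fun l => F ((k + l) mod n)%nat) = Rsum n F.
Proof.
  intros. rewrite <- (Rsum_reindex_lt n (k mod n) F) by (apply Nat.mod_upper_bound; lia).
  apply Rsum_ext; intros. f_equal. rewrite Nat.Div0.add_mod_idemp_l. auto.
Qed.
Lemma vnorm_reindex : forall n k v, (0 < n)%nat -> vnorm n (fun i => v ((k + i) mod n)%nat) = vnorm n v.
Proof.
  intros. rewrite !vnorm_eq. unfold vsq. f_equal.
  apply (Rsum_reindex n k (fun i => Cmod (v i) * Cmod (v i))); auto.
Qed.

Lemma Zmod_sub_nat : forall n j k, (0 < n)%nat -> (j < n)%nat -> (k < n)%nat ->
  Z.to_nat ((Z.of_nat j - Z.of_nat k) mod Z.of_nat n) = ((j + n - k) mod n)%nat.
Proof.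
  intros. apply Nat2Z.inj. rewrite Z2Nat.id by (apply Z.mod_pos_bound; lia).
  rewrite Nat2Z.inj_mod. rewrite Nat2Z.inj_sub by lia. rewrite Nat2Z.inj_add.
  replace (Z.of_nat j + Z.of_nat n - Z.of_nat k)%Z with ((Z.of_nat j - Z.of_nat k) + 1 * Z.of_nat n)%Z by ring.
  rewrite Z.mod_add by lia. auto.
Qed.

Lemma circ_eq_average : forall n a, (0 < n)%nat -> meq n (circ n a) (circ_average n (toep n a)).
Proof.
  intros n a Hn j k Hj Hk. unfold circ, circ_average, toep. rewrite Zmod_sub_nat by auto.
  set (d := ((j + n - k) mod n)%nat).
  assert (Hd : (d < n)%nat) by (apply Nat.mod_upper_bound; lia).
  assert (Hm : forall l, ((j + l) mod n = (d + (k + l) mod n) mod n)%nat).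
  { intros. unfold d. rewrite Nat.Div0.add_mod_idemp_l, Nat.Div0.add_mod_idemp_r.
    replace (j + n - k + (k + l))%nat with (j + l + 1 * n)%nat by lia. rewrite Nat.Div0.mod_add. auto. }
  rewrite (Csum_ext n _ (fun l => (fun m => a (Z.of_nat ((d + m) mod n) - Z.of_nat m)%Z) ((k + l) mod n)%nat)).
  2: { intros. rewrite Hm. auto. }
  rewrite (Csum_reindex n k (fun m => a (Z.of_nat ((d + m) mod n) - Z.of_nat m)%Z)) by auto.
  assert (Es : forall G, Csum n G = Cadd (Csum (n - d) G) (Csum d (fun i => G (n - d + i)%nat))).
  { intros. rewrite <- Csum_split. f_equal. lia. }
  rewrite Es.
  rewrite (Csum_ext (n - d) _ (fun _ => a (Z.of_nat d))).
  2: { intros. rewrite Nat.mod_small by lia. f_equal. lia. }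
  rewrite (Csum_ext d _ (fun _ => a (Z.of_nat d - Z.of_nat n)%Z)).
  2: { intros. replace (d + (n - d + i))%nat with (i + 1 * n)%nat by lia. rewrite Nat.Div0.mod_add.
       rewrite Nat.mod_small by lia. f_equal. lia. }
  rewrite !Csum_const. unfold circ_coef_of. rewrite minus_INR by lia. auto.
Qed.

Lemma opnorm_circ_average : forall n X, (0 < n)%nat -> opnorm n (circ_average n X) <= opnorm n X.
Proof.
  intros n X Hn. apply opnorm_le; auto. apply opnorm_ge0; auto. intros w.
  set (y := fun l j => Csum n (fun k => Cmul (X ((j + l) mod n)%nat ((k + l) mod n)%nat) (w k))).
  assert (E : forall j, mapply n (circ_average n X) w j = Cscal (/ INR n) (Csum n (fun l => y l j))).
  { intros. unfold mapply, circ_average, y.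
    transitivity (Cscal (/ INR n) (Csum n (fun k => Csum n (fun l => Cmul (X ((j + l) mod n)%nat ((k + l) mod n)%nat) (w k))))).
    rewrite <- Csum_scal. apply Csum_ext; intros. rewrite !Cscal_mul, Csum_mul_r. ring.
    f_equal. apply Csum_swap. }
  rewrite (vnorm_ext n _ (fun j => Cscal (/ INR n) (Csum n (fun l => y l j)))) by (intros; apply E).
  rewrite vnorm_scal. assert (Hn' : 0 < INR n) by (apply lt_0_INR; auto).
  rewrite Rabs_right by (apply Rle_ge, Rlt_le, Rinv_0_lt_compat; auto).
  assert (Hy : forall l, (l < n)%nat -> vnorm n (y l) <= opnorm n X * vnorm n w).
  { intros l Hl. set (w' := fun m => w ((n - l + m) mod n)%nat).
    assert (Ey : forall j, y l j = mapply n X w' ((l + j) mod n)%nat).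
    { intros. unfold y, mapply.
      rewrite (Csum_ext n _ (fun k => (fun m => Cmul (X ((j + l) mod n)%nat m) (w' m)) ((l + k) mod n)%nat)).
      rewrite (Csum_reindex n l (fun m => Cmul (X ((j + l) mod n)%nat m) (w' m))) by auto. f_equal. apply functional_extensionality; intros. f_equal. f_equal. f_equal; lia.
      intros. unfold w'. rewrite (Nat.add_comm l i). f_equal. f_equal.
      rewrite Nat.Div0.add_mod_idemp_r. replace (n - l + (i + l))%nat with (i + 1 * n)%nat by lia.
      rewrite Nat.Div0.mod_add, Nat.mod_small by lia. auto. }
    rewrite (vnorm_ext n _ (fun j => mapply n X w' ((l + j) mod n)%nat)) by (intros; apply Ey).
    rewrite vnorm_reindex by auto. unfold w'. rewrite <- (vnorm_reindex n (n - l) w) by auto.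
    apply opnorm_bound; auto. }
  eapply Rle_trans. apply Rmult_le_compat_l. apply Rlt_le, Rinv_0_lt_compat; auto. apply vnorm_Csum.
  eapply Rle_trans. apply Rmult_le_compat_l. apply Rlt_le, Rinv_0_lt_compat; auto.
  apply (Rsum_le n _ (fun _ => opnorm n X * vnorm n w)). apply Hy.
  rewrite Rsum_const. right. field. lra.
Qed.

Definition band_ind (lo hi k : nat) : R := if andb (lo <=? k)%nat (k <=? hi)%nat then 1 else 0.
Lemma Rsum_band_ind : forall lo hi m, Rsum m (band_ind lo hi) = INR (Nat.min m (S hi) - lo).
Proof.
  induction m. simpl; auto.
  change (Rsum (S m) (band_ind lo hi)) with (Rsum m (band_ind lo hi) + band_ind lo hi m).
  rewrite IHm. unfold band_ind. destruct (Nat.leb_spec lo m); destruct (Nat.leb_spec m hi); cbn [andb].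
  - replace (Nat.min (S m) (S hi) - lo)%nat with (S (Nat.min m (S hi) - lo)) by lia. rewrite S_INR; ring.
  - replace (Nat.min (S m) (S hi) - lo)%nat with (Nat.min m (S hi) - lo)%nat by lia. ring.
  - replace (Nat.min (S m) (S hi) - lo)%nat with (Nat.min m (S hi) - lo)%nat by lia. ring.
  - replace (Nat.min (S m) (S hi) - lo)%nat with (Nat.min m (S hi) - lo)%nat by lia. ring.
Qed.
Lemma Rsum_band_ind_le : forall n K j, Rsum n (band_ind (j - K) (j + K)) <= INR (2 * K + 1).
Proof. intros. rewrite Rsum_band_ind. apply le_INR. lia. Qed.

Lemma opnorm_le_frobenius : forall n X, (0 < n)%nat -> opnorm n X <= frobenius n X.
Proof. intros. apply opnorm_le; auto. apply sqrt_pos. intros; apply frobenius_bound. Qed.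

Definition band_defect_bound (K : nat) (Bb : R) (n : nat) : R := sqrt (INR (2 * K + 1) * (INR K * Bb) ^ 2 / INR n).

Lemma frobenius_band : forall n K c X, (0 < n)%nat -> 0 <= c ->
  (forall j k, (j < n)%nat -> (k < n)%nat -> Cmod (X j k) <= band_ind (j - K) (j + K) k * c) ->
  frobenius n X <= sqrt (INR n * INR (2 * K + 1) * c ^ 2).
Proof.
  intros. unfold frobenius. apply sqrt_le_1_alt.
  eapply Rle_trans. apply (Rsum_le n _ (fun j => INR (2 * K + 1) * c ^ 2)).
  - intros j Hj. eapply Rle_trans. apply (Rsum_le n _ (fun k => band_ind (j - K) (j + K) k * c ^ 2)).
    + intros k Hk. specialize (H1 j k Hj Hk). pose proof (Cmod_ge0 (X j k)).
      assert (0 <= band_ind (j - K) (j + K) k <= 1) by (unfold band_ind; destruct (andb _ _); lra).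
      assert (band_ind (j - K) (j + K) k * band_ind (j - K) (j + K) k = band_ind (j - K) (j + K) k)
        by (unfold band_ind; destruct (andb _ _); ring).
      simpl. assert (Cmod (X j k) * Cmod (X j k) <= (band_ind (j - K) (j + K) k * c) * (band_ind (j - K) (j + K) k * c))
        by (apply Rmult_le_compat; auto). nra.
    + rewrite (Rsum_ext n _ (fun k => c ^ 2 * band_ind (j - K) (j + K) k)) by (intros; ring).
      rewrite Rsum_scal. pose proof (Rsum_band_ind_le n K j). pose proof (pow2_ge_0 c). nra.
  - rewrite Rsum_const. right; ring.
Qed.

Section BandedDefect.
Variables (n K : nat) (b : Z -> Cx) (Bb : R).
Hypothesis Hn : (0 < n)%nat.
Hypothesis HK : (2 * K <= n)%nat.
Hypothesis Hsupp : forall d, (Z.abs d > Z.of_nat K)%Z -> b d = C0.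
Hypothesis Hbd : forall d, Cmod (b d) <= Bb.
Hypothesis HBb : 0 <= Bb.

Definition defect : mat := msub (toep n b) (circ n b).
Definition edge_row (j : nat) : bool := orb (j <? K)%nat (n - K <=? j)%nat.

Lemma Cmod_scaled_band_coef : forall j k m z, Z.abs z = Z.of_nat m ->
  ((m <= K)%nat -> (j - K <= k <= j + K)%nat) ->
  Cmod (Cscal (INR m / INR n) (b z)) <= band_ind (j - K) (j + K) k * (INR K * Bb / INR n).
Proof.
  intros j k m z Hz Hband.
  assert (HnR : 0 < INR n) by (apply lt_0_INR; auto).
  assert (Hind : 0 <= band_ind (j - K) (j + K) k) by (unfold band_ind; destruct (andb _ _); lra).
  destruct (Nat.le_gt_cases m K) as [HmK|HmK].
  - unfold band_ind. rewrite (proj2 (andb_true_iff _ _)) by (split; apply Nat.leb_le; lia).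
    rewrite Rmult_1_l, Cmod_scal.
    rewrite Rabs_right by (apply Rle_ge, Rmult_le_pos; [apply pos_INR|apply Rlt_le, Rinv_0_lt_compat; auto]).
    pose proof (Hbd z). pose proof (Cmod_ge0 (b z)).
    unfold Rdiv. replace (INR K * Bb * / INR n) with (INR K * / INR n * Bb) by ring.
    apply Rmult_le_compat; auto.
    + apply Rmult_le_pos; [apply pos_INR|apply Rlt_le, Rinv_0_lt_compat; auto].
    + apply Rmult_le_compat_r; [apply Rlt_le, Rinv_0_lt_compat; auto|apply le_INR; auto].
  - rewrite (Hsupp z) by lia. rewrite Cmod_scal, Cmod_C0, Rmult_0_r.
    apply Rmult_le_pos; auto. apply Rmult_le_pos; [apply Rmult_le_pos; [apply pos_INR|auto]|].
    apply Rlt_le, Rinv_0_lt_compat; auto.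
Qed.

(* Away from the first and last [K] rows the wrap-around term of the circulant vanishes, and
   the entry is [(j - k) / n] times a Toeplitz coefficient. *)
Lemma defect_interior_entry : forall j k, (K <= j)%nat -> (j < n - K)%nat -> (k < n)%nat ->
  Cmod (defect j k) <= band_ind (j - K) (j + K) k * (INR K * Bb / INR n).
Proof.
  intros j k H1 H2 H3. assert (Hj : (j < n)%nat) by lia.
  assert (HnR : 0 < INR n) by (apply lt_0_INR; auto).
  unfold defect, msub, toep, circ. rewrite Zmod_sub_nat by lia. unfold circ_coef_of.
  destruct (Nat.le_gt_cases k j) as [Hkj|Hkj].
  - replace ((j + n - k) mod n)%nat with (j - k)%nat
      by (rewrite <- (Nat.mod_small (j - k) n) by lia;
          replace (j + n - k)%nat with ((j - k) + 1 * n)%nat by lia; rewrite Nat.Div0.mod_add; auto).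
    rewrite (Hsupp (Z.of_nat (j - k) - Z.of_nat n)) by lia.
    replace (Z.of_nat j - Z.of_nat k)%Z with (Z.of_nat (j - k)) by lia.
    replace (Csub (b (Z.of_nat (j - k))) (Cscal (/ INR n) (Cadd (Cscal (INR n - INR (j - k)) (b (Z.of_nat (j - k))))
               (Cscal (INR (j - k)) C0))))
      with (Cscal (INR (j - k) / INR n) (b (Z.of_nat (j - k)))) by (apply Cext; simpl; field; lra).
    apply Cmod_scaled_band_coef; lia.
  - replace ((j + n - k) mod n)%nat with (j + n - k)%nat by (rewrite Nat.mod_small; lia).
    rewrite (Hsupp (Z.of_nat (j + n - k))) by lia.
    replace (Z.of_nat (j + n - k) - Z.of_nat n)%Z with (Z.of_nat j - Z.of_nat k)%Z by lia.
    replace (Csub (b (Z.of_nat j - Z.of_nat k)%Z) (Cscal (/ INR n) (Cadd (Cscal (INR n - INR (j + n - k)) C0)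
               (Cscal (INR (j + n - k)) (b (Z.of_nat j - Z.of_nat k)%Z)))))
      with (Cscal (INR (k - j) / INR n) (b (Z.of_nat j - Z.of_nat k)%Z))
      by (rewrite !minus_INR, plus_INR by lia; apply Cext; simpl; field; lra).
    apply Cmod_scaled_band_coef; lia.
Qed.

Definition defect_edge : mat := fun j k => if edge_row j then defect j k else C0.
Definition defect_interior : mat := fun j k => if edge_row j then C0 else defect j k.

Lemma defect_split : meq n defect (madd defect_edge defect_interior).
Proof. red; intros. unfold defect_edge, defect_interior, madd. destruct (edge_row i); cx. Qed.

Lemma rank_defect_edge : rank_le n defect_edge (2 * K).
Proof.
  exists (fun j l => if (l <? K)%nat then (if (j =? l)%nat then C1 else C0) else (if (j =? n - 2 * K + l)%nat then C1 else C0)),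
         (fun l k => if (l <? K)%nat then defect l k else defect (n - 2 * K + l)%nat k).
  red; intros j k Hj Hk. unfold defect_edge, edge_row.
  destruct (Nat.ltb_spec j K).
  - cbn [orb]. rewrite (Csum_single _ _ j) by (first [lia|intros l Hl Hne;
      destruct (Nat.ltb_spec l K); [rewrite (proj2 (Nat.eqb_neq j l)) by lia; cbv beta iota; ring|
        rewrite (proj2 (Nat.eqb_neq j (n - 2 * K + l))) by lia; cbv beta iota; ring]]).
    rewrite (proj2 (Nat.ltb_lt j K)), Nat.eqb_refl by lia. ring.
  - destruct (Nat.leb_spec (n - K) j); cbn [orb].
    + rewrite (Csum_single _ _ (j + 2 * K - n)) by (first [lia|intros l Hl Hne;
        destruct (Nat.ltb_spec l K); [rewrite (proj2 (Nat.eqb_neq j l)) by lia; cbv beta iota; ring|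
          rewrite (proj2 (Nat.eqb_neq j (n - 2 * K + l))) by lia; cbv beta iota; ring]]).
      rewrite (proj2 (Nat.ltb_ge (j + 2 * K - n) K)) by lia.
      replace (n - 2 * K + (j + 2 * K - n))%nat with j by lia. rewrite Nat.eqb_refl. ring.
    + transitivity (Csum (2 * K) (fun _ => C0)). rewrite Csum_zero; auto.
      apply Csum_ext; intros l Hl. destruct (Nat.ltb_spec l K).
      rewrite (proj2 (Nat.eqb_neq j l)) by lia; cbv beta iota; ring.
      rewrite (proj2 (Nat.eqb_neq j (n - 2 * K + l))) by lia; cbv beta iota; ring.
Qed.

Lemma opnorm_defect_interior : opnorm n defect_interior <= band_defect_bound K Bb n.
Proof.
  eapply Rle_trans. apply opnorm_le_frobenius; auto.
  assert (HnR : 0 < INR n) by (apply lt_0_INR; auto).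
  assert (Hc : 0 <= INR K * Bb / INR n) by (apply Rmult_le_pos; [apply Rmult_le_pos; [apply pos_INR|auto]|apply Rlt_le, Rinv_0_lt_compat; auto]).
  eapply Rle_trans. apply (frobenius_band n K (INR K * Bb / INR n)); auto.
  - intros j k Hj Hk. unfold defect_interior, edge_row. destruct (Nat.ltb_spec j K); simpl.
    rewrite Cmod_C0. unfold band_ind; destruct (andb _ _); lra.
    destruct (Nat.leb_spec (n - K) j); simpl.
    rewrite Cmod_C0. unfold band_ind; destruct (andb _ _); lra.
    apply defect_interior_entry; lia.
  - unfold band_defect_bound. right. f_equal. field. lra.
Qed.
End BandedDefect.

Lemma toep_sub_circ_banded : forall n K b Bb, (0 < n)%nat -> (2 * K <= n)%nat ->
  (forall d, (Z.abs d > Z.of_nat K)%Z -> b d = C0) -> (forall d, Cmod (b d) <= Bb) -> 0 <= Bb ->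
  rank_norm_split n (msub (toep n b) (circ n b)) (2 * K) (band_defect_bound K Bb n).
Proof.
  intros. exists (defect_edge n K b), (defect_interior n K b). split; [|split].
  apply defect_split. apply rank_defect_edge; auto. apply opnorm_defect_interior; auto.
Qed.

Definition dirichlet_sum (K : nat) (u : R) : Cx := Csum (S K) (fun j => Cexpi (INR j * u)).
Definition fejer_kernel (K : nat) (u : R) : R := / INR (S K) * (Cmod (dirichlet_sum K u) * Cmod (dirichlet_sum K u)).
Definition fejer_kernelC (K : nat) (u : R) : Cx := mkC (fejer_kernel K u) 0.
Definition zdiff (j l : nat) : Z := (Z.of_nat j - Z.of_nat l)%Z.

(* [sigma_K f (x) = 1/(K+1) sum_(|d| <= K) (K + 1 - |d|) a_d e^(i d x)], written as a double sum
   over [0 <= j, l <= K] with [d = j - l]. *)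
Definition fejer_mean (f : R -> Cx) (K : nat) (x : R) : Cx :=
  Cscal (/ INR (S K)) (Csum (S K) (fun j => Csum (S K) (fun l =>
    Cmul (fourier f (zdiff j l)) (Cexpi (IZR (zdiff j l) * x))))).

Lemma fejer_kernel_ge0 : forall K u, 0 <= fejer_kernel K u.
Proof.
  intros. unfold fejer_kernel. apply Rmult_le_pos. apply Rlt_le, Rinv_0_lt_compat, lt_0_INR; lia.
  pose proof (Cmod_ge0 (dirichlet_sum K u)); nra.
Qed.

Lemma fejer_kernelC_expand : forall K u, fejer_kernelC K u =
  Cscal (/ INR (S K)) (Csum (S K) (fun j => Csum (S K) (fun l => Cexpi (IZR (zdiff j l) * u)))).
Proof.
  intros. unfold fejer_kernelC, fejer_kernel.
  assert (E : Cmul (Cconj (dirichlet_sum K u)) (dirichlet_sum K u) = Csum (S K) (fun j => Csum (S K) (fun l => Cexpi (IZR (zdiff j l) * u)))).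
  { rewrite Csum_swap. unfold dirichlet_sum. rewrite Cconj_Csum, <- Csum_mul_r. apply Csum_ext; intros l Hl.
    rewrite <- Csum_mul_l. apply Csum_ext; intros j Hj. rewrite Cexpi_conj, Cexpi_add. f_equal.
    unfold zdiff. rewrite IZR_nat_sub. ring. }
  rewrite Cmul_conj_self in E. rewrite <- E. apply Cext; simpl; ring.
Qed.

Lemma Ccont_expi_shift : forall a b, Ccont (fun t => Cexpi (a * (b - t))).
Proof. intros. apply (Ccont_ext (fun t => Cexpi ((- a) * t + a * b))). intros; f_equal; ring. apply Ccont_expi. Qed.
Lemma Ccont_fejer_kernelC : forall K x, Ccont (fun t => fejer_kernelC K (x - t)).
Proof.
  intros. apply (Ccont_ext (fun t => Cscal (/ INR (S K)) (Csum (S K) (fun j => Csum (S K) (fun l => Cexpi (IZR (zdiff j l) * (x - t))))))).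
  intros; symmetry; apply fejer_kernelC_expand.
  apply Ccont_scal. apply (Ccont_Csum (S K) (fun j t => Csum (S K) (fun l => Cexpi (IZR (zdiff j l) * (x - t))))).
  intros. apply (Ccont_Csum (S K) (fun l t => Cexpi (IZR (zdiff i l) * (x - t)))). intros. apply Ccont_expi_shift.
Qed.
Lemma continuity_fejer_kernel : forall K x, continuity (fun t => fejer_kernel K (x - t)).
Proof. intros. destruct (Ccont_fejer_kernelC K x) as [H _]. exact H. Qed.

Lemma Ccont_fejer_mean : forall f K, Ccont (fejer_mean f K).
Proof.
  intros. unfold fejer_mean. apply Ccont_scal.
  apply (Ccont_Csum (S K) (fun j x => Csum (S K) (fun l => Cmul (fourier f (zdiff j l)) (Cexpi (IZR (zdiff j l) * x))))).
  intros. apply (Ccont_Csum (S K) (fun l x => Cmul (fourier f (zdiff i l)) (Cexpi (IZR (zdiff i l) * x)))).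
  intros. apply Ccont_mul. apply Ccont_const. apply Ccont_expi_lin.
Qed.

Lemma CI_fourier : forall g k, Ccont g ->
  CI (fun t => Cmul (g t) (Cexpi (- (IZR k * t)))) = Cscal (2 * PI) (fourier g k).
Proof.
  intros. rewrite fourier_CI by auto. apply Cext; simpl; field; pose proof PI_RGT_0; lra.
Qed.

Lemma fejer_mean_integrand : forall f K x t, Cmul (f t) (fejer_kernelC K (x - t)) =
  Cscal (/ INR (S K)) (Csum (S K) (fun j => Csum (S K) (fun l =>
      Cmul (Cexpi (IZR (zdiff j l) * x)) (Cmul (f t) (Cexpi (- (IZR (zdiff j l) * t))))))).
Proof.
  intros. rewrite fejer_kernelC_expand. rewrite !Cscal_mul.
  transitivity (Cmul (mkC (/ INR (S K)) 0) (Cmul (f t) (Csum (S K) (fun j => Csum (S K) (fun l => Cexpi (IZR (zdiff j l) * (x - t))))))).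
  ring. f_equal. rewrite <- Csum_mul_l. apply Csum_ext; intros. rewrite <- Csum_mul_l. apply Csum_ext; intros.
  replace (Cexpi (IZR (zdiff i i0) * (x - t))) with (Cmul (Cexpi (IZR (zdiff i i0) * x)) (Cexpi (- (IZR (zdiff i i0) * t)))).
  ring. rewrite Cexpi_add. f_equal; ring.
Qed.

Lemma fejer_mean_conv : forall f K x, Ccont f ->
  fejer_mean f K x = Cscal (/ (2 * PI)) (CI (fun t => Cmul (f t) (fejer_kernelC K (x - t)))).
Proof.
  intros. rewrite (CI_ext _ _ (fun t _ => fejer_mean_integrand f K x t)).
  rewrite CI_scal.
  2: { apply (Ccont_Csum (S K) (fun j t => Csum (S K) (fun l => Cmul (Cexpi (IZR (zdiff j l) * x)) (Cmul (f t) (Cexpi (- (IZR (zdiff j l) * t))))))).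
       intros. apply (Ccont_Csum (S K) (fun l t => Cmul (Cexpi (IZR (zdiff i l) * x)) (Cmul (f t) (Cexpi (- (IZR (zdiff i l) * t)))))).
       intros. apply Ccont_mul. apply Ccont_const. apply Ccont_mul; auto. apply Ccont_expi_neg. }
  rewrite (CI_Csum (S K) (fun j t => Csum (S K) (fun l => Cmul (Cexpi (IZR (zdiff j l) * x)) (Cmul (f t) (Cexpi (- (IZR (zdiff j l) * t))))))).
  2: { intros. apply (Ccont_Csum (S K) (fun l t => Cmul (Cexpi (IZR (zdiff i l) * x)) (Cmul (f t) (Cexpi (- (IZR (zdiff i l) * t)))))).
       intros. apply Ccont_mul. apply Ccont_const. apply Ccont_mul; auto. apply Ccont_expi_neg. }
  rewrite (Csum_ext (S K) _ (fun j => Cscal (2 * PI) (Csum (S K) (fun l => Cmul (fourier f (zdiff j l)) (Cexpi (IZR (zdiff j l) * x)))))).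
  2: { intros j Hj.
       rewrite (CI_Csum (S K) (fun l t => Cmul (Cexpi (IZR (zdiff j l) * x)) (Cmul (f t) (Cexpi (- (IZR (zdiff j l) * t)))))).
       2: { intros. apply Ccont_mul. apply Ccont_const. apply Ccont_mul; auto. apply Ccont_expi_neg. }
       rewrite <- Csum_scal. apply Csum_ext; intros l Hl.
       rewrite CI_cmul by (apply Ccont_mul; auto; apply Ccont_expi_neg).
       rewrite CI_fourier by auto. rewrite !Cscal_mul. ring. }
  rewrite Csum_scal. unfold fejer_mean.
  set (X := Csum (S K) (fun j => Csum (S K) (fun l => Cmul (fourier f (zdiff j l)) (Cexpi (IZR (zdiff j l) * x))))).
  assert (0 < INR (S K)) by (apply lt_0_INR; lia). pose proof PI_RGT_0.
  apply Cext; unfold Cscal; cbn [re im]; field; lra.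
Qed.

Lemma fejer_mean_one : forall K x, fejer_mean (fun _ => C1) K x = C1.
Proof.
  intros. unfold fejer_mean.
  rewrite (Csum_ext (S K) _ (fun _ => C1)).
  rewrite Csum_const. assert (0 < INR (S K)) by (apply lt_0_INR; lia).
  apply Cext; unfold Cscal; cbn [re im C1]; field; lra.
  intros j Hj. rewrite (Csum_single (S K) _ j); auto.
  rewrite fourier_one. unfold zdiff. replace (Z.of_nat j - Z.of_nat j)%Z with 0%Z by lia. simpl.
  rewrite Rmult_0_l, Cexpi_0. ring.
  intros l Hl Hne. rewrite fourier_one. unfold zdiff. destruct (Z.eqb_spec (Z.of_nat l - Z.of_nat j) 0). lia.
  rewrite (proj2 (Z.eqb_neq (Z.of_nat j - Z.of_nat l) 0)) by lia. ring.
Qed.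

Lemma RI_fejer_kernel : forall K x, RI (fun t => fejer_kernel K (x - t)) = 2 * PI.
Proof.
  intros. pose proof (fejer_mean_conv (fun _ => C1) K x (Ccont_const C1)). rewrite fejer_mean_one in H.
  apply (f_equal re) in H. unfold CI, Cscal in H. cbn [re im C1] in H.
  rewrite (RI_ext _ (fun t => fejer_kernel K (x - t))) in H.
  2: { intros. unfold fejer_kernelC. simpl. ring. }
  pose proof PI_RGT_0. apply (Rmult_eq_compat_l (2 * PI)) in H.
  rewrite <- Rmult_assoc, Rinv_r, Rmult_1_l in H by lra. lra.
Qed.

Lemma dirichlet_sum_telescope : forall m u,
  Cmul (Csum m (fun j => Cexpi (INR j * u))) (Csub (Cexpi u) C1) = Csub (Cexpi (INR m * u)) C1.
Proof.
  induction m; intros.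
  - simpl. rewrite Rmult_0_l, Cexpi_0. unfold Csub; ring.
  - change (Csum (S m) (fun j => Cexpi (INR j * u))) with (Cadd (Csum m (fun j => Cexpi (INR j * u))) (Cexpi (INR m * u))).
    transitivity (Cadd (Cmul (Csum m (fun j => Cexpi (INR j * u))) (Csub (Cexpi u) C1))
                       (Csub (Cmul (Cexpi (INR m * u)) (Cexpi u)) (Cexpi (INR m * u)))).
    unfold Csub; ring. rewrite IHm, Cexpi_add. rewrite S_INR. replace (INR m * u + u) with ((INR m + 1) * u) by ring.
    unfold Csub; ring.
Qed.

Lemma Cmod_expi_sub1 : forall u, Cmod (Csub (Cexpi u) C1) = 2 * Rabs (sin (u / 2)).
Proof.
  intros. unfold Cmod, Csub, Copp, Cadd, Cexpi, C1; cbn [re im].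
  pose proof (cos_2a_sin (u / 2)). replace (2 * (u / 2)) with u in H by field.
  pose proof (sin2_cos2 u). unfold Rsqr in H0.
  transitivity (sqrt (Rsqr (2 * sin (u / 2)))).
  f_equal. unfold Rsqr. rewrite H in *. nra.
  rewrite sqrt_Rsqr_abs, Rabs_mult, (Rabs_right 2) by lra. auto.
Qed.

Lemma fejer_kernel_tail : forall K u s, 0 < s -> s <= Rabs (sin (u / 2)) -> fejer_kernel K u <= / (INR (S K) * (s * s)).
Proof.
  intros. unfold fejer_kernel.
  pose proof (dirichlet_sum_telescope (S K) u). fold (dirichlet_sum K u) in H1.
  apply (f_equal Cmod) in H1. rewrite Cmod_mul, Cmod_expi_sub1 in H1.
  assert (Cmod (Csub (Cexpi (INR (S K) * u)) C1) <= 2).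
  { eapply Rle_trans. apply Cmod_sub. rewrite Cmod_expi, Cmod_C1. lra. }
  assert (HS : Cmod (dirichlet_sum K u) * s <= 1).
  { pose proof (Cmod_ge0 (dirichlet_sum K u)). nra. }
  assert (0 < INR (S K)) by (apply lt_0_INR; lia).
  pose proof (Cmod_ge0 (dirichlet_sum K u)).
  assert (Cmod (dirichlet_sum K u) * Cmod (dirichlet_sum K u) <= / (s * s)).
  { apply (Rmult_le_reg_r (s * s)). nra. rewrite Rinv_l by (apply Rmult_integral_contrapositive_currified; lra). assert (0 <= Cmod (dirichlet_sum K u) * s) by nra. nra. }
  rewrite Rinv_mult. apply Rmult_le_compat_l. apply Rlt_le, Rinv_0_lt_compat; auto. auto.
Qed.

Lemma sin_half_lb : forall d u, 0 < d <= PI -> d <= Rabs u <= 2 * PI - d -> sin (d / 2) <= Rabs (sin (u / 2)).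
Proof.
  intros d u Hd Hu. pose proof PI_RGT_0.
  assert (Hw : Rabs (sin (u / 2)) = sin (Rabs u / 2)).
  { destruct (Rle_dec 0 u). rewrite (Rabs_right u) in * by lra. apply Rabs_right.
    apply Rle_ge, sin_ge_0; lra.
    rewrite (Rabs_left u) in * by lra. replace (- u / 2) with (- (u / 2)) by field. rewrite sin_neg.
    assert (0 <= sin (- (u / 2))) by (apply sin_ge_0; lra). rewrite sin_neg in H0.
    rewrite Rabs_left1 by lra. auto. }
  rewrite Hw. set (w := Rabs u / 2).
  destruct (Rle_dec w (PI / 2)).
  - apply sin_incr_1; unfold w in *; lra.
  - rewrite <- (sin_PI_x w). apply sin_incr_1; unfold w in *; lra.
Qed.

Lemma Cmod_le_reim : forall z, Cmod z <= Rabs (re z) + Rabs (im z).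
Proof.
  intros. replace z with (Cadd (mkC (re z) 0) (mkC 0 (im z))) at 1 by (apply Cext; simpl; ring).
  eapply Rle_trans. apply Cmod_add. rewrite Cmod_real.
  assert (Cmod (mkC 0 (im z)) = Rabs (im z)).
  { unfold Cmod; simpl. rewrite <- sqrt_Rsqr_abs. f_equal. unfold Rsqr; ring. }
  lra.
Qed.

Lemma C2pi_Ccont : forall f, C2pi f -> Ccont f.
Proof. intros f [H1 [H2 _]]. split; auto. Qed.

Lemma C2pi_bound : forall f, C2pi f -> exists B, 0 <= B /\ forall t, - PI <= t <= PI -> Cmod (f t) <= B.
Proof.
  intros. pose proof (C2pi_Ccont f H) as Hc. pose proof PI_RGT_0.
  destruct (continuity_ab_maj (fun t => Cmod (f t)) (- PI) PI) as [Mx [HMx _]]. lra.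
  { intros. apply (Ccont_mod f Hc). }
  exists (Cmod (f Mx)). split. apply Cmod_ge0. auto.
Qed.

(* Uniform continuity on [-3 PI, 3 PI] plus periodicity. *)
Lemma C2pi_unif_cont : forall f, C2pi f -> forall eta, 0 < eta -> exists d, 0 < d <= PI /\
  forall x t, - PI <= x <= PI -> - PI <= t <= PI ->
    Rabs (x - t) < d \/ 2 * PI - d < Rabs (x - t) -> Cmod (Csub (f x) (f t)) <= eta.
Proof.
  intros f [Hre [Him Hper]] eta Heta. pose proof PI_RGT_0.
  destruct (Heine (fun t => re (f t)) (fun c => - (3 * PI) <= c <= 3 * PI) (compact_P3 _ _)
              (fun x _ => Hre x) (mkposreal (eta / 2) ltac:(lra))) as [d1 Hd1].
  destruct (Heine (fun t => im (f t)) (fun c => - (3 * PI) <= c <= 3 * PI) (compact_P3 _ _)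
              (fun x _ => Him x) (mkposreal (eta / 2) ltac:(lra))) as [d2 Hd2].
  simpl in Hd1, Hd2. pose proof (cond_pos d1). pose proof (cond_pos d2).
  set (d := Rmin (Rmin d1 d2) PI).
  assert (Hd : 0 < d <= PI) by (split; [apply Rmin_pos; [apply Rmin_pos|]; lra | apply Rmin_r]).
  assert (Hdd1 : d <= d1) by (unfold d; eapply Rle_trans; [apply Rmin_l|apply Rmin_l]).
  assert (Hdd2 : d <= d2) by (unfold d; eapply Rle_trans; [apply Rmin_l|apply Rmin_r]).
  assert (Hclose : forall x y, - PI <= x <= PI -> - (3 * PI) <= y <= 3 * PI -> Rabs (x - y) < d ->
            Cmod (Csub (f x) (f y)) <= eta).
  { intros x y Hx Hy Hxy. eapply Rle_trans. apply Cmod_le_reim.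
    assert (Rabs (re (f x) - re (f y)) < eta / 2) by (apply Hd1; auto; lra).
    assert (Rabs (im (f x) - im (f y)) < eta / 2) by (apply Hd2; auto; lra).
    unfold Csub, Cadd, Copp; cbn [re im]. unfold Rminus in *. lra. }
  exists d. split; auto. intros x t Hx Ht [Hxt|Hxt].
  - apply Hclose; auto; lra.
  - destruct (Rle_dec 0 (x - t)).
    + rewrite Rabs_right in Hxt by lra. rewrite <- (Hper t).
      apply Hclose; auto; [lra|]. rewrite Rabs_left1; lra.
    + rewrite Rabs_left in Hxt by lra.
      replace (f t) with (f (t - 2 * PI)) by (rewrite <- (Hper (t - 2 * PI)); f_equal; ring).
      apply Hclose; auto; [lra|]. rewrite Rabs_right; lra.
Qed.

Lemma fejer_mean_sub : forall f K x, Ccont f ->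
  Csub (f x) (fejer_mean f K x) =
  Cscal (/ (2 * PI)) (CI (fun t => Cmul (Csub (f x) (f t)) (fejer_kernelC K (x - t)))).
Proof.
  intros f K x Hc.
  assert (Hfx : f x = Cscal (/ (2 * PI)) (CI (fun t => Cmul (f x) (fejer_kernelC K (x - t))))).
  { rewrite CI_cmul by apply Ccont_fejer_kernelC.
    pose proof (fejer_mean_conv (fun _ => C1) K x (Ccont_const C1)) as H1.
    rewrite fejer_mean_one in H1.
    rewrite (CI_ext (fun t => Cmul C1 (fejer_kernelC K (x - t))) (fun t => fejer_kernelC K (x - t))) in H1
      by (intros; ring).
    transitivity (Cmul (f x) (Cscal (/ (2 * PI)) (CI (fun t => fejer_kernelC K (x - t))))).
    - rewrite <- H1. ring.
    - rewrite !Cscal_mul. ring. }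
  rewrite (CI_ext _ (fun t => Csub (Cmul (f x) (fejer_kernelC K (x - t))) (Cmul (f t) (fejer_kernelC K (x - t)))))
    by (intros; unfold Csub; ring).
  rewrite CI_sub, (fejer_mean_conv f K x Hc), Hfx at 1.
  - apply Cext; unfold Csub, Cscal, Cadd, Copp; cbn [re im]; ring.
  - apply Ccont_mul; [apply Ccont_const|apply Ccont_fejer_kernelC].
  - apply Ccont_mul; [auto|apply Ccont_fejer_kernelC].
Qed.

(* Near [x] the kernel has mass [2 PI] and [f] varies little; away from [x] the kernel itself
   is small. *)
Lemma fejer_integrand_le : forall f K x t d Bf eta, 0 < d <= PI -> 0 <= eta ->
  (Rabs (x - t) < d \/ 2 * PI - d < Rabs (x - t) -> Cmod (Csub (f x) (f t)) <= eta) ->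
  Cmod (Csub (f x) (f t)) <= 2 * Bf ->
  Cmod (Cmul (Csub (f x) (f t)) (fejer_kernelC K (x - t)))
    <= eta * fejer_kernel K (x - t) + 2 * Bf * / (INR (S K) * (sin (d / 2) * sin (d / 2))).
Proof.
  intros f K x t d Bf eta Hd Heta Hnear Hfar. pose proof PI_RGT_0.
  assert (Hs : 0 < sin (d / 2)) by (apply sin_gt_0; lra).
  assert (HSK : 0 < INR (S K)) by (apply lt_0_INR; lia).
  rewrite Cmod_mul. unfold fejer_kernelC.
  rewrite Cmod_real, Rabs_right by (apply Rle_ge, fejer_kernel_ge0).
  pose proof (fejer_kernel_ge0 K (x - t)). pose proof (Cmod_ge0 (Csub (f x) (f t))).
  assert (0 <= / (INR (S K) * (sin (d / 2) * sin (d / 2))))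
    by (apply Rlt_le, Rinv_0_lt_compat, Rmult_lt_0_compat; nra).
  destruct (classic (Rabs (x - t) < d \/ 2 * PI - d < Rabs (x - t))) as [Hxt|Hxt].
  - pose proof (Hnear Hxt). nra.
  - assert (fejer_kernel K (x - t) <= / (INR (S K) * (sin (d / 2) * sin (d / 2)))).
    { apply fejer_kernel_tail; auto. apply sin_half_lb; auto.
      apply Decidable.not_or in Hxt. destruct Hxt. lra. }
    assert (Cmod (Csub (f x) (f t)) * fejer_kernel K (x - t)
            <= 2 * Bf * / (INR (S K) * (sin (d / 2) * sin (d / 2)))) by (apply Rmult_le_compat; auto).
    nra.
Qed.

Theorem fejer_uniform : forall f, C2pi f -> forall eta, 0 < eta -> exists K : nat,
  forall x, - PI <= x <= PI -> Cmod (Csub (f x) (fejer_mean f K x)) <= eta.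
Proof.
  intros f Hf eta Heta. pose proof (C2pi_Ccont f Hf) as Hc. pose proof PI_RGT_0.
  destruct (C2pi_bound f Hf) as [Bf [HBf HfB]].
  destruct (C2pi_unif_cont f Hf (eta / 2)) as [d [Hd Hnear]]; [lra|].
  set (s := sin (d / 2)). assert (Hs : 0 < s) by (apply sin_gt_0; lra).
  destruct (INR_unbounded (4 * Bf / (eta * (s * s)))) as [K HK].
  exists K. intros x Hx.
  assert (HSK : 0 < INR (S K)) by (apply lt_0_INR; lia).
  set (c := 2 * Bf * / (INR (S K) * (s * s))).
  assert (Hceta : c <= eta / 2).
  { unfold c. assert (0 < s * s) by nra.
    assert (HS : 4 * Bf / (eta * (s * s)) < INR (S K)) by (rewrite S_INR; lra).
    apply (Rmult_lt_compat_r (eta * (s * s))) in HS; [|nra].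
    unfold Rdiv in HS. rewrite Rmult_assoc, Rinv_l, Rmult_1_r in HS by nra.
    apply (Rmult_le_reg_r (INR (S K) * (s * s))); [nra|].
    rewrite Rmult_assoc, Rinv_l, Rmult_1_r by nra. nra. }
  assert (Hpt : forall t, - PI <= t <= PI ->
     Cmod (Cmul (Csub (f x) (f t)) (fejer_kernelC K (x - t))) <= eta / 2 * fejer_kernel K (x - t) + c).
  { intros t Ht. apply fejer_integrand_le; auto; [lra|].
    eapply Rle_trans. apply Cmod_sub. pose proof (HfB x Hx). pose proof (HfB t Ht). lra. }
  assert (Hint : Ccont (fun t => Cmul (Csub (f x) (f t)) (fejer_kernelC K (x - t))))
    by (apply Ccont_mul; [apply Ccont_sub; auto; apply Ccont_const|apply Ccont_fejer_kernelC]).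
  assert (HI : RI (fun t => Cmod (Cmul (Csub (f x) (f t)) (fejer_kernelC K (x - t))))
               <= RI (fun t => eta / 2 * fejer_kernel K (x - t) + c)).
  { apply RI_le; auto. apply Ccont_mod; auto.
    apply cont_plus; [apply cont_mult; [apply cont_const|apply continuity_fejer_kernel]|apply cont_const]. }
  rewrite RI_plus, RI_scal, RI_fejer_kernel, RI_const in HI;
    try apply continuity_fejer_kernel; try apply cont_const;
    try (apply cont_mult; [apply cont_const|apply continuity_fejer_kernel]).
  rewrite fejer_mean_sub, Cmod_scal, Rabs_right by (auto; apply Rle_ge, Rlt_le, Rinv_0_lt_compat; lra).
  eapply Rle_trans. apply Rmult_le_compat_l; [apply Rlt_le, Rinv_0_lt_compat; lra|apply CI_mod; auto].
  apply (Rmult_le_compat_l (/ (2 * PI))) in HI; [|apply Rlt_le, Rinv_0_lt_compat; lra].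
  eapply Rle_trans. apply HI.
  replace (/ (2 * PI) * (eta / 2 * (2 * PI) + 2 * PI * c)) with (eta / 2 + c) by (field; lra).
  lra.
Qed.

Lemma fourier_fejer_mean : forall f K d, Ccont f ->
  fourier (fejer_mean f K) d = Cscal (/ INR (S K)) (Csum (S K) (fun j => Csum (S K) (fun l =>
     Cmul (fourier f (zdiff j l)) (if Z.eqb (zdiff j l) d then C1 else C0)))).
Proof.
  intros. rewrite fourier_CI by apply Ccont_fejer_mean.
  rewrite (CI_ext _ (fun x => Cscal (/ INR (S K)) (Csum (S K) (fun j => Csum (S K) (fun l =>
      Cmul (fourier f (zdiff j l)) (Cmul (Cexpi (IZR (zdiff j l) * x)) (Cexpi (- (IZR d * x))))))))).
  2: { intros. unfold fejer_mean. rewrite !Cscal_mul.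
       transitivity (Cmul (mkC (/ INR (S K)) 0) (Cmul (Csum (S K) (fun j => Csum (S K) (fun l =>
         Cmul (fourier f (zdiff j l)) (Cexpi (IZR (zdiff j l) * t))))) (Cexpi (- (IZR d * t))))). ring.
       f_equal. rewrite <- Csum_mul_r. apply Csum_ext; intros. rewrite <- Csum_mul_r. apply Csum_ext; intros. ring. }
  assert (Hcc : forall j l, Ccont (fun x => Cmul (fourier f (zdiff j l)) (Cmul (Cexpi (IZR (zdiff j l) * x)) (Cexpi (- (IZR d * x)))))).
  { intros. apply Ccont_mul. apply Ccont_const. apply Ccont_mul. apply Ccont_expi_lin. apply Ccont_expi_neg. }
  rewrite CI_scal.
  2: { apply (Ccont_Csum (S K) (fun j x => Csum (S K) (fun l => Cmul (fourier f (zdiff j l)) (Cmul (Cexpi (IZR (zdiff j l) * x)) (Cexpi (- (IZR d * x))))))).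
       intros. apply (Ccont_Csum (S K) (fun l x => Cmul (fourier f (zdiff i l)) (Cmul (Cexpi (IZR (zdiff i l) * x)) (Cexpi (- (IZR d * x)))))).
       intros; auto. }
  rewrite (CI_Csum (S K) (fun j x => Csum (S K) (fun l => Cmul (fourier f (zdiff j l)) (Cmul (Cexpi (IZR (zdiff j l) * x)) (Cexpi (- (IZR d * x))))))).
  2: { intros. apply (Ccont_Csum (S K) (fun l x => Cmul (fourier f (zdiff i l)) (Cmul (Cexpi (IZR (zdiff i l) * x)) (Cexpi (- (IZR d * x)))))).
       intros; auto. }
  rewrite (Csum_ext (S K) _ (fun j => Cscal (2 * PI) (Csum (S K) (fun l => Cmul (fourier f (zdiff j l)) (if Z.eqb (zdiff j l) d then C1 else C0))))).
  2: { intros j Hj.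
       rewrite (CI_Csum (S K) (fun l x => Cmul (fourier f (zdiff j l)) (Cmul (Cexpi (IZR (zdiff j l) * x)) (Cexpi (- (IZR d * x)))))) by auto.
       rewrite <- Csum_scal. apply Csum_ext; intros l Hl.
       rewrite CI_cmul by (apply Ccont_mul; [apply Ccont_expi_lin|apply Ccont_expi_neg]).
       rewrite CI_fourier by apply Ccont_expi_lin. rewrite fourier_expi. rewrite !Cscal_mul. ring. }
  rewrite Csum_scal.
  set (X := Csum (S K) (fun j => Csum (S K) (fun l => Cmul (fourier f (zdiff j l)) (if Z.eqb (zdiff j l) d then C1 else C0)))).
  pose proof PI_RGT_0. assert (0 < INR (S K)) by (apply lt_0_INR; lia). apply Cext; unfold Cscal; cbn [re im]; field; lra.
Qed.

Lemma fourier_fejer_mean_supp : forall f K d, Ccont f -> (Z.abs d > Z.of_nat K)%Z -> fourier (fejer_mean f K) d = C0.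
Proof.
  intros. rewrite fourier_fejer_mean by auto.
  rewrite (Csum_ext (S K) _ (fun _ => C0)). rewrite Csum_zero. cx.
  intros j Hj. transitivity (Csum (S K) (fun _ => C0)). apply Csum_ext; intros l Hl.
  rewrite (proj2 (Z.eqb_neq (zdiff j l) d)). ring. unfold zdiff. lia. apply Csum_zero.
Qed.

Lemma fourier_bound : forall g B, Ccont g -> (forall t, - PI <= t <= PI -> Cmod (g t) <= B) ->
  forall k, Cmod (fourier g k) <= B.
Proof.
  intros. rewrite fourier_CI by auto. rewrite Cmod_scal. pose proof PI_RGT_0.
  rewrite Rabs_right by (apply Rle_ge, Rlt_le, Rinv_0_lt_compat; lra).
  assert (Hc : Ccont (fun t => Cmul (g t) (Cexpi (- (IZR k * t))))) by (apply Ccont_mul; auto; apply Ccont_expi_neg).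
  eapply Rle_trans. apply Rmult_le_compat_l. apply Rlt_le, Rinv_0_lt_compat; lra. apply CI_mod; auto.
  assert (RI (fun t => Cmod (Cmul (g t) (Cexpi (- (IZR k * t))))) <= RI (fun _ => B)).
  { apply RI_le. apply Ccont_mod; auto. apply cont_const. intros. rewrite Cmod_mul, Cmod_expi, Rmult_1_r; auto. }
  rewrite RI_const in H2. apply (Rmult_le_compat_l (/ (2 * PI))) in H2. 2: apply Rlt_le, Rinv_0_lt_compat; lra.
  eapply Rle_trans. apply H2. right; field; lra.
Qed.

Lemma fourier_fejer_mean_bound : forall f K B, Ccont f -> (forall k, Cmod (fourier f k) <= B) -> 0 <= B ->
  forall d, Cmod (fourier (fejer_mean f K) d) <= INR (S K) * B.
Proof.
  intros. rewrite fourier_fejer_mean by auto. rewrite Cmod_scal.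
  assert (0 < INR (S K)) by (apply lt_0_INR; lia).
  rewrite Rabs_right by (apply Rle_ge, Rlt_le, Rinv_0_lt_compat; lra).
  eapply Rle_trans. apply Rmult_le_compat_l. apply Rlt_le, Rinv_0_lt_compat; lra. apply Cmod_Csum.
  eapply Rle_trans. apply Rmult_le_compat_l. apply Rlt_le, Rinv_0_lt_compat; lra.
  apply (Rsum_le (S K) _ (fun _ => INR (S K) * B)). intros j Hj.
  eapply Rle_trans. apply Cmod_Csum. rewrite <- Rsum_const. apply Rsum_le. intros l Hl.
  rewrite Cmod_mul. destruct (Z.eqb (zdiff j l) d). rewrite Cmod_C1, Rmult_1_r; auto. rewrite Cmod_C0, Rmult_0_r; auto.
  rewrite Rsum_const. right. field. lra.
Qed.

Lemma opnorm_circ_le_toep : forall n a, (0 < n)%nat -> opnorm n (circ n a) <= opnorm n (toep n a).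
Proof.
  intros. eapply Rle_trans. apply opnorm_meq; auto. apply circ_eq_average; auto. apply opnorm_circ_average; auto.
Qed.

Lemma opnorm_toeplitz_opt_circ_le : forall f B n, C2pi f -> (0 < n)%nat -> 0 <= B ->
  (forall t, - PI <= t <= PI -> Cmod (f t) <= B) ->
  opnorm n (toeplitz f n) <= B /\ opnorm n (opt_circ f n) <= B.
Proof.
  intros. pose proof (C2pi_Ccont f H).
  assert (opnorm n (toeplitz f n) <= B) by (apply opnorm_toeplitz_le; auto).
  split; auto. rewrite opt_circ_circ. eapply Rle_trans. apply opnorm_circ_le_toep; auto. auto.
Qed.

Lemma circ_coef_of_add : forall a b c n m, (forall z, a z = Cadd (b z) (c z)) ->
  circ_coef_of a n m = Cadd (circ_coef_of b n m) (circ_coef_of c n m).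
Proof. intros. unfold circ_coef_of. rewrite !H. rewrite !Cscal_mul. ring. Qed.

Lemma toep_sub_circ_add : forall n a b c, (forall z, a z = Cadd (b z) (c z)) ->
  meq n (msub (toep n a) (circ n a))
        (madd (msub (toep n b) (circ n b)) (msub (toep n c) (circ n c))).
Proof.
  intros n a b c Habc i j _ _. unfold msub, madd, toep, circ.
  rewrite Habc, (circ_coef_of_add a b c) by auto. unfold Csub; ring.
Qed.

Lemma opnorm_toep_sub_circ_le : forall n g eta, (0 < n)%nat -> Ccont g -> 0 <= eta ->
  (forall t, - PI <= t <= PI -> Cmod (g t) <= eta) ->
  opnorm n (msub (toep n (fourier g)) (circ n (fourier g))) <= 2 * eta.
Proof.
  intros. eapply Rle_trans. apply opnorm_msub; auto.
  assert (HT : opnorm n (toep n (fourier g)) <= eta) by (apply opnorm_toeplitz_le; auto).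
  pose proof (opnorm_circ_le_toep n (fourier g) H). lra.
Qed.

Lemma band_defect_bound_eventually_le : forall K Bb e, 0 < e -> exists N0 : nat,
  forall n, (n > N0)%nat -> (2 * K <= n)%nat /\ band_defect_bound K Bb n <= e.
Proof.
  intros K Bb e He.
  set (Cc := INR (2 * K + 1) * (INR K * Bb) ^ 2).
  assert (HCc : 0 <= Cc) by (unfold Cc; apply Rmult_le_pos; [apply pos_INR|apply pow2_ge_0]).
  assert (HCe : 0 <= Cc / (e * e)) by (apply Rmult_le_pos; [lra|apply Rlt_le, Rinv_0_lt_compat; nra]).
  destruct (INR_unbounded (Cc / (e * e) + INR (2 * K))) as [N0 HN0].
  exists N0. intros n Hn.
  assert (HnR : INR N0 < INR n) by (apply lt_INR; lia).
  pose proof (pos_INR (2 * K)). split.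
  - apply INR_le. lra.
  - assert (0 < INR n) by lra.
    assert (HCn : Cc <= e * e * INR n).
    { apply (Rmult_le_reg_r (/ (e * e))); [apply Rinv_0_lt_compat; nra|].
      replace (e * e * INR n * / (e * e)) with (INR n) by (field; lra). unfold Rdiv in HCe. lra. }
    unfold band_defect_bound. fold Cc. rewrite <- (sqrt_square e) by lra. apply sqrt_le_1_alt.
    apply (Rmult_le_reg_r (INR n)); auto. unfold Rdiv.
    rewrite Rmult_assoc, Rinv_l, Rmult_1_r by lra. lra.
Qed.

(* Split [f] into its Fejer mean, a trigonometric polynomial of degree [K] handled by the banded
   decomposition, and a uniformly small remainder. *)
Theorem toeplitz_sub_opt_circ_split : forall f, C2pi f -> forall e, 0 < e -> exists K N0 : nat,
  forall n, (n > N0)%nat -> rank_norm_split n (msub (toeplitz f n) (opt_circ f n)) (2 * K) e.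
Proof.
  intros f Hf e He. pose proof (C2pi_Ccont f Hf) as Hc.
  destruct (fejer_uniform f Hf (e / 4)) as [K HK]; [lra|].
  destruct (C2pi_bound f Hf) as [Bf [HBf HfB]].
  set (b := fourier (fejer_mean f K)).
  set (g := fun t => Csub (f t) (fejer_mean f K t)).
  assert (Hg : Ccont g) by (apply Ccont_sub; auto; apply Ccont_fejer_mean).
  set (Bb := INR (S K) * Bf).
  assert (HBb : 0 <= Bb) by (unfold Bb; apply Rmult_le_pos; auto; apply pos_INR).
  destruct (band_defect_bound_eventually_le K Bb (e / 2)) as [N0 HN0]; [lra|].
  exists K, N0. intros n Hn. destruct (HN0 n Hn) as [H2K Hdef].
  assert (Hn0 : (0 < n)%nat) by lia.
  apply (rank_norm_split_mono n _ (2 * K + 0) _ (band_defect_bound K Bb n + 2 * (e / 4))); [lia|lra|].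
  eapply rank_norm_split_meq. apply (toep_sub_circ_add n (fourier f) b (fourier g)).
  { intros. unfold g. rewrite fourier_sub by (auto; apply Ccont_fejer_mean). unfold b, Csub; ring. }
  apply rank_norm_split_madd; auto.
  - apply toep_sub_circ_banded; auto.
    + intros. apply fourier_fejer_mean_supp; auto.
    + intros. apply fourier_fejer_mean_bound; auto. intros. apply fourier_bound; auto.
  - apply rank_norm_split_of_opnorm, opnorm_toep_sub_circ_le; auto. lra.
Qed.

Lemma adj_mul_self_expand : forall n P X Y, meq n P (madd mid (madd X Y)) ->
  meq n (mmul n (madj P) P)
    (madd mid (madd (madd (madd X (madj X)) (madd (mmul n (madj X) (madd X Y)) (mmul n (madj Y) X)))
                    (madd (madd Y (madj Y)) (mmul n (madj Y) Y)))).
Proof.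
  intros n P X Y HP.
  set (M := madd mid (madd X Y)).
  eapply meq_trans. apply mmul_meq. apply madj_meq. apply HP. apply HP. fold M.
  assert (HA : meq n (madj M) (madd mid (madd (madj X) (madj Y)))).
  { red; intros. unfold M, madj, madd. rewrite !Cconj_add. f_equal. apply (madj_mid n); auto. }
  eapply meq_trans. apply mmul_meq. apply HA. apply meq_refl.
  eapply meq_trans. apply mmul_madd_l.
  eapply meq_trans. apply madd_meq. apply mmul_mid_l. apply mmul_madd_r.
  eapply meq_trans. apply madd_meq. apply meq_refl. apply madd_meq. apply mmul_mid_r. apply meq_refl.
  eapply meq_trans. apply madd_meq. apply meq_refl. apply madd_meq. apply meq_refl. apply mmul_madd_l.
  eapply meq_trans. apply madd_meq. apply meq_refl. apply madd_meq. apply meq_refl. apply madd_meq. apply meq_refl. apply mmul_madd_r.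
  red; intros. unfold M, madd. ring.
Qed.

Lemma mmul_left_inverse_madd : forall n B Y D, meq n (mmul n B Y) mid ->
  meq n (mmul n B (madd Y D)) (madd mid (mmul n B D)).
Proof. intros. eapply meq_trans. apply mmul_madd_r. apply madd_meq; [auto|apply meq_refl]. Qed.

Lemma adj_mul_self_near_id : forall n P X r d, (0 < n)%nat -> d <= 1 ->
  meq n P (madd mid X) -> rank_norm_split n X r d ->
  exists R E, meq n (mmul n (madj P) P) (madd mid (madd R E)) /\
    rank_le n R (4 * r) /\ opnorm n E <= 3 * d.
Proof.
  intros n P X r d Hn Hd HP [R [E [HX [HR HE]]]].
  exists (madd (madd R (madj R)) (madd (mmul n (madj R) (madd R E)) (mmul n (madj E) R))),
         (madd (madd E (madj E)) (mmul n (madj E) E)).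
  split; [|split].
  - apply adj_mul_self_expand. eapply meq_trans; [apply HP|]. apply madd_meq; auto. apply meq_refl.
  - apply (rank_le_mono n _ ((r + r) + (r + r))); [|lia].
    apply rank_le_madd; apply rank_le_madd.
    + auto.
    + apply rank_le_madj; auto.
    + apply rank_le_mmul_r, rank_le_madj; auto.
    + apply rank_le_mmul_l; auto.
  - pose proof (opnorm_adj n E Hn). pose proof (opnorm_ge0 n E Hn).
    pose proof (opnorm_ge0 n (madj E) Hn).
    eapply Rle_trans. apply opnorm_madd; auto.
    eapply Rle_trans. apply Rplus_le_compat. apply opnorm_madd; auto. apply opnorm_mmul; auto.
    assert (opnorm n (madj E) * opnorm n E <= d * d) by (apply Rmult_le_compat; lra).
    nra.
Qed.

(* The cosine series is truncated after [L] terms uniformly for matrices of norm at most [B];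
   on the truncations the splitting of [A - c] propagates, the rank growing by the factor
   [cos_rank_factor L]. *)
Lemma mcos_toeplitz_sub_split : forall f, C2pi f -> forall e, 0 < e -> exists r N0 : nat,
  forall n, (n > N0)%nat ->
    rank_norm_split n (msub (mcos n (toeplitz f n)) (mcos n (opt_circ f n))) r e.
Proof.
  intros f Hf e He.
  destruct (C2pi_bound f Hf) as [Bf [HBf HfB]].
  set (B := Rmax Bf 1).
  assert (HB1 : 1 <= B) by apply Rmax_r. assert (HBB : Bf <= B) by apply Rmax_l.
  destruct (mcos_approx B (e / 3)) as [L HL]; [lra|lra|].
  set (G := INR (cos_rank_factor L) * B ^ (2 * L)).
  assert (HG : 0 <= G) by (unfold G; apply Rmult_le_pos; [apply pos_INR|apply pow_le; lra]).
  set (e0 := e / (3 * (G + 1))).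
  assert (He0 : 0 < e0) by (unfold e0; apply Rdiv_lt_0_compat; lra).
  assert (HGe0 : G * e0 <= e / 3).
  { unfold e0, Rdiv. replace (G * (e * / (3 * (G + 1)))) with (e / 3 * (G / (G + 1))) by (field; lra).
    apply (Rle_trans _ (e / 3 * 1)); [|lra]. apply Rmult_le_compat_l; [lra|].
    apply (Rmult_le_reg_r (G + 1)); [lra|]. unfold Rdiv. rewrite Rmult_assoc, Rinv_l by lra. lra. }
  destruct (toeplitz_sub_opt_circ_split f Hf e0 He0) as [K [N0 HAc]].
  exists (cos_rank_factor L * (2 * K) + 0)%nat, N0. intros n Hn.
  assert (Hn0 : (0 < n)%nat) by lia.
  destruct (opnorm_toeplitz_opt_circ_le f Bf n Hf Hn0 HBf HfB) as [HA Hc].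
  set (A := toeplitz f n) in *. set (c := opt_circ f n) in *.
  pose proof (HL n A Hn0 ltac:(lra)) as HLA. pose proof (HL n c Hn0 ltac:(lra)) as HLc.
  apply (rank_norm_split_mono n _ (cos_rank_factor L * (2 * K) + 0) _ (G * e0 + (e / 3 + e / 3))); [lia|lra|].
  apply (rank_norm_split_meq n _ (madd (msub (cos_partial n A L) (cos_partial n c L))
           (msub (msub (mcos n A) (cos_partial n A L)) (msub (mcos n c) (cos_partial n c L))))).
  { intros i j _ _. unfold msub, madd, Csub. ring. }
  apply rank_norm_split_madd; auto.
  - apply cos_partial_sub_split; auto; lra.
  - apply rank_norm_split_of_opnorm.
    eapply Rle_trans. apply opnorm_msub; auto. lra.
Qed.

Theorem mainTheorem11 (f : R -> Cx) (Hf : C2pi f)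
  (Inv : nat -> mat)
  (Hinv : forall n : nat, (0 < n)%nat ->
            is_inverse n (mcos n (opt_circ f n)) (Inv n))
  (Cst : R)
  (Hbound : forall n : nat, (0 < n)%nat -> opnorm n (Inv n) <= Cst) :
  forall eps : R, eps > 0 ->
  exists N M : nat, (0 < N)%nat /\ (0 < M)%nat /\
    forall n : nat, (n > N)%nat ->
      let P := mmul n (Inv n) (mcos n (toeplitz f n)) in
      exists Rn En : mat,
        meq n (mmul n (madj P) P) (madd mid (madd Rn En)) /\
        rank_le n Rn (4 * M) /\
        opnorm n En <= eps.
Proof.
  intros eps Heps.
  assert (HC : 0 <= Cst) by (eapply Rle_trans; [apply (opnorm_ge0 1 (Inv 1%nat)); lia|apply Hbound; lia]).
  set (d := Rmin 1 (eps / 3)).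
  assert (Hd : 0 < d <= 1) by (split; [apply Rmin_pos; lra|apply Rmin_l]).
  assert (Hd3 : 3 * d <= eps) by (pose proof (Rmin_r 1 (eps / 3)); fold d in H; lra).
  destruct (mcos_toeplitz_sub_split f Hf (d / (Cst + 1))) as [r [N0 Hsplit]].
  { apply Rdiv_lt_0_compat; lra. }
  exists (S N0), (S r). split; [lia|split; [lia|]].
  intros n Hn P. assert (Hn0 : (0 < n)%nat) by lia.
  set (D := msub (mcos n (toeplitz f n)) (mcos n (opt_circ f n))).
  assert (HP : meq n P (madd mid (mmul n (Inv n) D))).
  { apply (meq_trans n _ (mmul n (Inv n) (madd (mcos n (opt_circ f n)) D))).
    - apply mmul_meq; [apply meq_refl|]. intros i j _ _. unfold D, madd, msub, Csub. ring.
    - apply mmul_left_inverse_madd, (proj1 (Hinv n Hn0)). }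
  assert (HQ : rank_norm_split n (mmul n (Inv n) D) r d).
  { apply (rank_norm_split_mono n _ r _ (opnorm n (Inv n) * (d / (Cst + 1)))); [lia| |].
    - assert (Hq : d / (Cst + 1) * (Cst + 1) = d) by (field; lra).
      assert (opnorm n (Inv n) * (d / (Cst + 1)) <= Cst * (d / (Cst + 1)))
        by (apply Rmult_le_compat_r; auto; apply Rlt_le, Rdiv_lt_0_compat; lra).
      apply (Rmult_le_reg_r (Cst + 1)); [lra|]. nra.
    - apply rank_norm_split_mmul_l; auto. apply Hsplit. lia. }
  destruct (adj_mul_self_near_id n P _ r d Hn0 ltac:(lra) HP HQ) as [R [E [HPP [HR HE]]]].
  exists R, E. split; [|split]; auto.
  - apply (rank_le_mono n _ (4 * r)); auto. lia.
  - lra.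
Qed.
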